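(* Let $(X,\mathbb{A},d)$ be a complete $C^*$-algebra valued metric space, where $\mathbb{A}$ is a unital $C^*$-algebra, and let $T:X\to X$ be a $C^*$-algebra valued Ćirić-type1 contractive mapping, i.e. for every $x,y\in X$ there is $q(x,y)\in\mathbb{A}$ with $0\le \|q(x,y)\|<1$, and there is a mapping $\delta:X\times X\to\mathbb{A}_+$, such that $$d(T^n x,T^n y)\preceq (q(x,y)^* )^n\,\delta(x,y)\,q(x,y)^n\quad\text{for all }x,y\in X,\ n\in\mathbb{N}.$$ Then $T$ is orbitally continuous on $X$ if and only if $T$ has a unique fixed point in $X$.
   Context: $\mathbb{A}$ denotes a unital $C^*$-algebra with unit $I$ and zero $\theta$. An element $a\in\mathbb{A}$ is positive, written $a\succeq\theta$, if $a^*=a$ and its spectrum is contained in $[0,\infty)$; $\mathbb{A}_+$ is the set of positive elements, and $a\succeq b$ means $a-b\succeq\theta$. A $C^*$-algebra valued metric space $(X,\mathbb{A},d)$ is a nonempty set $X$ with $d:X\times X\to\mathbb{A}$ such that for all $x,y,z\in X$: $d(x,y)\succeq\theta$, with $d(x,y)=\theta$ iff $x=y$; $d(x,y)=d(y,x)$; $d(x,y)\preceq d(x,z)+d(z,y)$. A sequence $\{x_n\}$ converges to $x$ if $\|d(x_n,x)\|\to0$, and is Cauchy if $\|d(x_n,x_m)\|\to0$ as $n,m\to\infty$; the space is complete if every Cauchy sequence converges to a point of $X$. A self-map $T$ of $X$ is orbitally continuous at $u\in X$ if for every $x\in X$ and every increasing sequence of positive integers $\{n_i\}$, $\|d(T^{n_i}x,u)\|\to0$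 implies $\|d(T^{n_i+1}x,Tu)\|\to0$ as $i\to\infty$; $T$ is orbitally continuous on $X$ if it is orbitally continuous at every $u\in X$. *)

From Stdlib Require Import Reals.
Open Scope R_scope.

Record Cx : Type := mkC { Re : R; Im : R }.
Definition Cadd (z w : Cx) : Cx := mkC (Re z + Re w) (Im z + Im w).
Definition Cmul (z w : Cx) : Cx :=
  mkC (Re z * Re w - Im z * Im w) (Re z * Im w + Im z * Re w).
Definition Cconj (z : Cx) : Cx := mkC (Re z) (- Im z).
Definition Cone : Cx := mkC 1 0.
Definition Cmod (z : Cx) : R := sqrt (Re z * Re z + Im z * Im z).

Record CstarAlgebra : Type := {
  car :> Type;
  cadd : car -> car -> car;
  copp : car -> car;
  czero : car;
  cmul : car -> car -> car;
  cone : car;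
  cscal : Cx -> car -> car;
  cstar : car -> car;
  cnorm : car -> R;
  cadd_assoc : forall a b c, cadd a (cadd b c) = cadd (cadd a b) c;
  cadd_comm : forall a b, cadd a b = cadd b a;
  cadd_0 : forall a, cadd czero a = a;
  cadd_opp : forall a, cadd (copp a) a = czero;
  cscal_assoc : forall z w a, cscal z (cscal w a) = cscal (Cmul z w) a;
  cscal_1 : forall a, cscal Cone a = a;
  cscal_addC : forall z w a, cscal (Cadd z w) a = cadd (cscal z a) (cscal w a);
  cscal_addA : forall z a b, cscal z (cadd a b) = cadd (cscal z a) (cscal z b);
  cmul_assoc : forall a b c, cmul a (cmul b c) = cmul (cmul a b) c;
  cmul_1l : forall a, cmul cone a = a;
  cmul_1r : forall a, cmul a cone = a;
  cmul_addl : forall a b c, cmul (cadd a b) c = cadd (cmul a c) (cmul b c);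
  cmul_addr : forall a b c, cmul a (cadd b c) = cadd (cmul a b) (cmul a c);
  cscal_mull : forall z a b, cscal z (cmul a b) = cmul (cscal z a) b;
  cscal_mulr : forall z a b, cscal z (cmul a b) = cmul a (cscal z b);
  cstar_invol : forall a, cstar (cstar a) = a;
  cstar_add : forall a b, cstar (cadd a b) = cadd (cstar a) (cstar b);
  cstar_mul : forall a b, cstar (cmul a b) = cmul (cstar b) (cstar a);
  cstar_scal : forall z a, cstar (cscal z a) = cscal (Cconj z) (cstar a);
  cnorm_eq0 : forall a, cnorm a = 0 -> a = czero;
  cnorm_triangle : forall a b, cnorm (cadd a b) <= cnorm a + cnorm b;
  cnorm_scal : forall z a, cnorm (cscal z a) = Cmod z * cnorm a;
  cnorm_submult : forall a b, cnorm (cmul a b) <= cnorm a * cnorm b;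
  cnorm_one : cnorm cone = 1;
  cnorm_cstar : forall a, cnorm (cmul (cstar a) a) = cnorm a * cnorm a;
  ccomplete : forall u : nat -> car,
    (forall eps, eps > 0 -> exists N, forall n m, (n >= N)%nat -> (m >= N)%nat ->
        cnorm (cadd (u n) (copp (u m))) < eps) ->
    exists l, forall eps, eps > 0 -> exists N, forall n, (n >= N)%nat ->
        cnorm (cadd (u n) (copp l)) < eps
}.

Arguments cadd {_}. Arguments copp {_}. Arguments czero {_}. Arguments cmul {_}.
Arguments cone {_}. Arguments cscal {_}. Arguments cstar {_}. Arguments cnorm {_}.

Section CstarDefs.
Variable A : CstarAlgebra.

Definition csub (a b : A) : A := cadd a (copp b).

Fixpoint cpow (a : A) (n : nat) : A :=
  match n with O => cone | S k => cmul a (cpow a k) end.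

Definition invertible (a : A) : Prop :=
  exists b : A, cmul a b = cone /\ cmul b a = cone.

Definition spectrum (a : A) (z : Cx) : Prop := ~ invertible (csub a (cscal z cone)).

Definition positive (a : A) : Prop :=
  cstar a = a /\ forall z, spectrum a z -> Im z = 0 /\ 0 <= Re z.

Definition cle (a b : A) : Prop := positive (csub b a).
End CstarDefs.

Arguments csub {_}. Arguments cpow {_}. Arguments positive {_}. Arguments cle {_}.

Definition cstar_metric (A : CstarAlgebra) (X : Type) (d : X -> X -> A) : Prop :=
  inhabited X /\
  (forall x y, positive (d x y)) /\
  (forall x y, d x y = czero <-> x = y) /\
  (forall x y, d x y = d y x) /\
  (forall x y z, cle (d x y) (cadd (d x z) (d z y))).

Definition cconverges {A : CstarAlgebra} {X : Type} (d : X -> X -> A)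
  (u : nat -> X) (x : X) : Prop :=
  Un_cv (fun n => cnorm (d (u n) x)) 0.

Definition ccauchy {A : CstarAlgebra} {X : Type} (d : X -> X -> A) (u : nat -> X) : Prop :=
  forall eps, eps > 0 -> exists N, forall n m, (n >= N)%nat -> (m >= N)%nat ->
    cnorm (d (u n) (u m)) < eps.

Definition ccomplete_metric {A : CstarAlgebra} {X : Type} (d : X -> X -> A) : Prop :=
  forall u, ccauchy d u -> exists x, cconverges d u x.

Fixpoint iter {X : Type} (n : nat) (T : X -> X) (x : X) : X :=
  match n with O => x | S k => T (iter k T x) end.

Definition orbitally_continuous_at {A : CstarAlgebra} {X : Type} (d : X -> X -> A)
  (T : X -> X) (u : X) : Prop :=
  forall (x : X) (ni : nat -> nat),
    (forall i, (ni i < ni (S i))%nat) ->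
    cconverges d (fun i => iter (ni i) T x) u ->
    cconverges d (fun i => iter (S (ni i)) T x) (T u).

Definition orbitally_continuous {A : CstarAlgebra} {X : Type} (d : X -> X -> A)
  (T : X -> X) : Prop := forall u, orbitally_continuous_at d T u.

Definition ciric_type1 {A : CstarAlgebra} {X : Type} (d : X -> X -> A) (T : X -> X) : Prop :=
  exists (q : X -> X -> A) (delta : X -> X -> A),
    (forall x y, 0 <= cnorm (q x y) < 1) /\
    (forall x y, positive (delta x y)) /\
    (forall x y (n : nat), (1 <= n)%nat ->
       cle (d (iter n T x) (iter n T y))
           (cmul (cmul (cpow (cstar (q x y)) n) (delta x y)) (cpow (q x y) n))).

(* The norm is monotone on positive elements, so [x, y |-> |d(x,y)|] is an ordinary metric.
   Since the algebra is only given by its axioms, monotonicity is derived from the fact that a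
   self-adjoint [h] has [|h|] or [-|h|] in its spectrum; this in turn follows from a discrete
   Cauchy estimate over roots of unity (a resolvent bounded by [M] outside the disc of radius
   [rho] forces [|h^k| <= rho^(k+1) M]) and [|h^(2^j)| = |h|^(2^j)].
   The Ciric condition then gives [|d(T^n x, T^n y)| <= (|delta(x,y)| + |d(x,y)|) |q(x,y)|^n].
   Hence orbits are Cauchy, and every orbit (and each of its subsequences) converges to any fixed
   point, which is therefore unique.  Orbital continuity at the limit of an orbit makes that
   limit a fixed point; conversely, a fixed point [u = T u] is the limit of [T^(n_i + 1) x] as
   well as of [T^(n_i) x], which is orbital continuity. *)

From Stdlib Require Import Reals Lra Lia Psatz ClassicalEpsilon Classical.
Open Scope R_scope.

Arguments cadd_assoc {_}.
Arguments cadd_comm {_}.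
Arguments cadd_0 {_}.
Arguments cadd_opp {_}.
Arguments cscal_assoc {_}.
Arguments cscal_1 {_}.
Arguments cscal_addC {_}.
Arguments cscal_addA {_}.
Arguments cmul_assoc {_}.
Arguments cmul_1l {_}.
Arguments cmul_1r {_}.
Arguments cmul_addl {_}.
Arguments cmul_addr {_}.
Arguments cscal_mull {_}.
Arguments cscal_mulr {_}.
Arguments cstar_invol {_}.
Arguments cstar_add {_}.
Arguments cstar_mul {_}.
Arguments cstar_scal {_}.
Arguments cnorm_eq0 {_}.
Arguments cnorm_triangle {_}.
Arguments cnorm_scal {_}.
Arguments cnorm_submult {_}.
Arguments cnorm_one {_}.
Arguments cnorm_cstar {_}.
Arguments ccomplete {_}.

Lemma Ceq (z w : Cx) : Re z = Re w -> Im z = Im w -> z = w.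
Proof. destruct z, w; simpl; intros; subst; reflexivity. Qed.

Ltac cx := apply Ceq; simpl; ring.

Definition RC (r : R) : Cx := mkC r 0.
Definition Czero : Cx := mkC 0 0.
Definition Copp (z : Cx) : Cx := mkC (- Re z) (- Im z).
Definition Csub (z w : Cx) : Cx := Cadd z (Copp w).
Definition Cinv (z : Cx) : Cx :=
  mkC (Re z / (Re z * Re z + Im z * Im z)) (- Im z / (Re z * Re z + Im z * Im z)).
Fixpoint Cpow (z : Cx) (n : nat) : Cx :=
  match n with O => Cone | S k => Cmul z (Cpow z k) end.

Lemma Cmul_comm z w : Cmul z w = Cmul w z. Proof. cx. Qed.
Lemma Cmul_assoc z w u : Cmul z (Cmul w u) = Cmul (Cmul z w) u. Proof. cx. Qed.
Lemma Cmul_1l z : Cmul Cone z = z. Proof. cx. Qed.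
Lemma Cmul_1r z : Cmul z Cone = z. Proof. cx. Qed.

Lemma Cmod_sq z : Cmod z * Cmod z = Re z * Re z + Im z * Im z.
Proof. unfold Cmod. apply sqrt_sqrt. nra. Qed.
Lemma Cmod_ge0 z : 0 <= Cmod z. Proof. apply sqrt_pos. Qed.
Lemma Cmod_mul z w : Cmod (Cmul z w) = Cmod z * Cmod w.
Proof.
  unfold Cmod. rewrite <- sqrt_mult by nra. f_equal. simpl. ring.
Qed.
Lemma Cmod_RC r : Cmod (RC r) = Rabs r.
Proof. unfold Cmod, RC; simpl. rewrite <- sqrt_Rsqr_abs. f_equal. unfold Rsqr. ring. Qed.
Lemma Cmod_Re z : Rabs (Re z) <= Cmod z.
Proof. unfold Cmod. rewrite <- sqrt_Rsqr_abs. apply sqrt_le_1_alt. unfold Rsqr. nra. Qed.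
Lemma Cmod_le_of_sq z r : 0 <= r -> Re z * Re z + Im z * Im z <= r * r -> Cmod z <= r.
Proof. intros H1 H2. pose proof (Cmod_sq z). pose proof (Cmod_ge0 z). nra. Qed.
Lemma Cmod_triangle z w : Cmod (Cadd z w) <= Cmod z + Cmod w.
Proof.
  pose proof (Cmod_sq z) as Hz; pose proof (Cmod_sq w) as Hw.
  pose proof (Cmod_ge0 z) as Gz; pose proof (Cmod_ge0 w) as Gw.
  apply Cmod_le_of_sq. lra.
  simpl.
  assert (K: Re z * Re w + Im z * Im w <= Cmod z * Cmod w).
  { assert (K2: (Re z * Re w + Im z * Im w)^2 <= (Cmod z * Cmod w)^2).
    { replace ((Cmod z * Cmod w)^2) with ((Cmod z * Cmod z) * (Cmod w * Cmod w)) by ring.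
      rewrite Hz, Hw. pose proof (pow2_ge_0 (Re z * Im w - Im z * Re w)). nra. }
    pose proof (Rmult_le_pos _ _ Gz Gw). destruct (Rle_dec (Re z * Re w + Im z * Im w) (Cmod z * Cmod w)); auto. nra. }
  nra.
Qed.
Lemma Cmod_opp z : Cmod (Copp z) = Cmod z.
Proof. unfold Cmod; simpl; f_equal; ring. Qed.
Lemma Cmod_one : Cmod Cone = 1.
Proof. unfold Cmod; simpl. replace (1*1+0*0) with 1 by ring. apply sqrt_1. Qed.
Lemma Cmod_zero : Cmod Czero = 0.
Proof. unfold Cmod; simpl. replace (0*0+0*0) with 0 by ring. apply sqrt_0. Qed.
Lemma Cmod_eq0 z : Cmod z = 0 -> z = Czero.
Proof. intros H. pose proof (Cmod_sq z). rewrite H in H0. apply Ceq; simpl; nra. Qed.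

Lemma Cinv_r z : z <> Czero -> Cmul z (Cinv z) = Cone.
Proof.
  intros H. assert (Re z * Re z + Im z * Im z <> 0).
  { intro E. apply H. apply Ceq; simpl; nra. }
  apply Ceq; simpl; field; auto.
Qed.
Lemma Cmod_Cinv z : z <> Czero -> Cmod (Cinv z) = / Cmod z.
Proof.
  intros H. assert (Cmod z <> 0) by (intro E; apply H, Cmod_eq0, E).
  pose proof (Cmod_mul z (Cinv z)). rewrite Cinv_r, Cmod_one in H1 by auto.
  field_simplify_eq; auto. lra.
Qed.

Lemma Cmod_Cpow z n : Cmod (Cpow z n) = Cmod z ^ n.
Proof. induction n; simpl. apply Cmod_one. rewrite Cmod_mul, IHn. ring. Qed.
Lemma Cpow_add z n m : Cpow z (n + m) = Cmul (Cpow z n) (Cpow z m).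
Proof. induction n; simpl. rewrite Cmul_1l; auto. rewrite IHn, Cmul_assoc; auto. Qed.
Lemma Cpow_mul z n m : Cpow z (n * m) = Cpow (Cpow z n) m.
Proof.
  revert n; induction m; intros n; simpl. rewrite Nat.mul_0_r; auto.
  rewrite Nat.mul_succ_r, Nat.add_comm, Cpow_add, IHm; auto.
Qed.
Lemma Cpow_Cmul z w n : Cpow (Cmul z w) n = Cmul (Cpow z n) (Cpow w n).
Proof. induction n; simpl. cx. rewrite IHn. cx. Qed.
Lemma Cpow_one n : Cpow Cone n = Cone.
Proof. induction n; simpl; auto. rewrite IHn; cx. Qed.

Section CstarFacts.
Context {A : CstarAlgebra}.
Implicit Types a b c : A.

Definition sc (z : Cx) : A := cscal z cone.

Lemma addr0 a : cadd a czero = a.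
Proof. rewrite cadd_comm; apply cadd_0. Qed.
Lemma addrN a : cadd a (copp a) = czero.
Proof. rewrite cadd_comm; apply cadd_opp. Qed.
Lemma addIr a b c : cadd a c = cadd b c -> a = b.
Proof.
  intros H. rewrite <- (addr0 a), <- (addr0 b), <- (addrN c), !cadd_assoc, H. reflexivity.
Qed.
Lemma addr_id_eq0 a b : cadd a b = b -> a = czero.
Proof. intros H. apply (addIr _ _ b). rewrite cadd_0. auto. Qed.
Lemma opp_unique a b : cadd a b = czero -> b = copp a.
Proof.
  intros H. apply (addIr _ _ a). rewrite cadd_opp, cadd_comm. auto.
Qed.
Lemma oppK a : copp (copp a) = a.
Proof. symmetry. apply opp_unique. apply cadd_opp. Qed.
Lemma oppr0 : copp (@czero A) = czero.
Proof. symmetry. apply opp_unique. apply cadd_0. Qed.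
Lemma oppD a b : copp (cadd a b) = cadd (copp a) (copp b).
Proof.
  symmetry. apply opp_unique.
  replace (cadd (cadd a b) (cadd (copp a) (copp b)))
    with (cadd (cadd a (copp a)) (cadd b (copp b))).
  rewrite !addrN, cadd_0; auto.
  rewrite !cadd_assoc. f_equal. rewrite <- !cadd_assoc. f_equal. apply cadd_comm.
Qed.
Lemma mulr0 a : cmul a czero = czero.
Proof. apply (addr_id_eq0 _ (cmul a czero)). rewrite <- cmul_addr, cadd_0. auto. Qed.
Lemma mul0r a : cmul czero a = czero.
Proof. apply (addr_id_eq0 _ (cmul czero a)). rewrite <- cmul_addl, cadd_0. auto. Qed.
Lemma mulNr a b : cmul (copp a) b = copp (cmul a b).
Proof. apply opp_unique. rewrite <- cmul_addl, addrN, mul0r. auto. Qed.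
Lemma mulrN a b : cmul a (copp b) = copp (cmul a b).
Proof. apply opp_unique. rewrite <- cmul_addr, addrN, mulr0. auto. Qed.
Lemma scale0 a : cscal Czero a = czero.
Proof.
  apply (addr_id_eq0 _ (cscal Czero a)). rewrite <- cscal_addC. f_equal. cx.
Qed.
Lemma scaleN1 a : cscal (Copp Cone) a = copp a.
Proof.
  apply opp_unique. rewrite <- (cscal_1 a) at 1. rewrite <- cscal_addC.
  replace (Cadd Cone (Copp Cone)) with Czero by cx. apply scale0.
Qed.
Lemma cnorm0 : cnorm (@czero A) = 0.
Proof. rewrite <- (scale0 czero), cnorm_scal, Cmod_zero. ring. Qed.
Lemma cnormN a : cnorm (copp a) = cnorm a.
Proof. rewrite <- scaleN1, cnorm_scal, Cmod_opp, Cmod_one. ring. Qed.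
Lemma cnorm_ge0 a : 0 <= cnorm a.
Proof.
  pose proof (cnorm_triangle a (copp a)) as H. rewrite addrN, cnorm0, cnormN in H. lra.
Qed.
Lemma subr_eq0 a b : csub a b = czero -> a = b.
Proof. unfold csub. intros H. apply opp_unique in H. rewrite <- (oppK a), <- H, oppK. auto. Qed.
Lemma cnorm_sub_eq0 a b : cnorm (csub a b) = 0 -> a = b.
Proof. intros H. apply subr_eq0, cnorm_eq0, H. Qed.
Lemma oppB a b : copp (csub a b) = csub b a.
Proof. unfold csub. rewrite oppD, oppK, cadd_comm. auto. Qed.
Lemma cnorm_subC a b : cnorm (csub a b) = cnorm (csub b a).
Proof. rewrite <- oppB, cnormN. auto. Qed.
Lemma cnorm_sub_le a b : cnorm (csub a b) <= cnorm a + cnorm b.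
Proof. unfold csub. rewrite <- (cnormN b). apply cnorm_triangle. Qed.
Lemma cnorm_sub_triangle a b c : cnorm (csub a c) <= cnorm (csub a b) + cnorm (csub b c).
Proof.
  replace (csub a c) with (cadd (csub a b) (csub b c)). apply cnorm_triangle.
  unfold csub. rewrite <- cadd_assoc. f_equal. rewrite cadd_assoc, cadd_opp, cadd_0. auto.
Qed.
Lemma cnorm_sub_ge a b : cnorm a - cnorm b <= cnorm (csub a b).
Proof.
  pose proof (cnorm_triangle (csub a b) b). unfold csub in *.
  rewrite <- cadd_assoc, cadd_opp, addr0 in H. lra.
Qed.
Lemma cone_neq0 : (@cone A) <> czero.
Proof. intros H. pose proof (@cnorm_one A). rewrite H, cnorm0 in H0. lra. Qed.

Lemma sc_mull z a : cmul (sc z) a = cscal z a.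
Proof. unfold sc. rewrite <- cscal_mull, cmul_1l. auto. Qed.
Lemma sc_mulr z a : cmul a (sc z) = cscal z a.
Proof. unfold sc. rewrite <- cscal_mulr, cmul_1r. auto. Qed.
Lemma sc_comm z a : cmul (sc z) a = cmul a (sc z).
Proof. rewrite sc_mull, sc_mulr. auto. Qed.
Lemma sc_mul z w : sc (Cmul z w) = cmul (sc z) (sc w).
Proof. rewrite sc_mull. unfold sc. rewrite cscal_assoc. auto. Qed.
Lemma sc_add z w : sc (Cadd z w) = cadd (sc z) (sc w).
Proof. unfold sc. apply cscal_addC. Qed.
Lemma sc_norm z : cnorm (sc z) = Cmod z.
Proof. unfold sc. rewrite cnorm_scal, cnorm_one. ring. Qed.
Lemma sc_one : sc Cone = cone.
Proof. apply cscal_1. Qed.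
Lemma sc_zero : sc Czero = czero.
Proof. apply scale0. Qed.
Lemma sc_opp z : sc (Copp z) = copp (sc z).
Proof.
  replace (Copp z) with (Cmul (Copp Cone) z) by cx. unfold sc.
  rewrite <- cscal_assoc, scaleN1. auto.
Qed.
Lemma sc_sub z w : sc (Csub z w) = csub (sc z) (sc w).
Proof. unfold Csub, csub. rewrite sc_add, sc_opp. auto. Qed.

Lemma star_one : cstar (@cone A) = cone.
Proof.
  pose proof (cstar_mul (@cone A) (cstar cone)) as H. rewrite cstar_invol in H.
  rewrite !cmul_1l in H. rewrite cstar_invol in H. auto.
Qed.
Lemma star_opp a : cstar (copp a) = copp (cstar a).
Proof. rewrite <- !scaleN1, cstar_scal. f_equal. cx. Qed.
Lemma star_sc z : cstar (sc z) = sc (Cconj z).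
Proof. unfold sc. rewrite cstar_scal, star_one. auto. Qed.
Lemma star_sub a b : cstar (csub a b) = csub (cstar a) (cstar b).
Proof. unfold csub. rewrite cstar_add, star_opp. auto. Qed.
Lemma cnorm_star_le a : cnorm a <= cnorm (cstar a).
Proof.
  pose proof (cnorm_cstar a). pose proof (cnorm_submult (cstar a) a).
  pose proof (cnorm_ge0 a). pose proof (cnorm_ge0 (cstar a)).
  destruct (Req_dec (cnorm a) 0). lra. nra.
Qed.
Lemma cnorm_star a : cnorm (cstar a) = cnorm a.
Proof.
  apply Rle_antisym. rewrite <- (cstar_invol a) at 2. apply cnorm_star_le. apply cnorm_star_le.
Qed.
Lemma cnorm_mul3_le a b c : cnorm (cmul (cmul a b) c) <= cnorm a * cnorm b * cnorm c.
Proof.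
  eapply Rle_trans. apply cnorm_submult. apply Rmult_le_compat_r. apply cnorm_ge0.
  apply cnorm_submult.
Qed.
Lemma sub_sub_cancel (p q y : A) : csub (csub p y) (csub q y) = csub p q.
Proof.
  unfold csub. rewrite oppD, oppK. rewrite <- cadd_assoc. f_equal.
  rewrite (cadd_comm (copp q)), cadd_assoc, cadd_opp, cadd_0. auto.
Qed.
Lemma add_sub_cancel (p q : A) : cadd q (csub p q) = p.
Proof. unfold csub. rewrite cadd_comm, <- cadd_assoc, cadd_opp, addr0. auto. Qed.
Lemma addrK (a b : A) : csub (cadd a b) b = a.
Proof. unfold csub. rewrite <- cadd_assoc, addrN, addr0. auto. Qed.
Lemma sub_add_sub (p l h : A) : cadd (csub p h) (csub l p) = csub l h.
Proof.
  unfold csub. rewrite cadd_comm, <- cadd_assoc, (cadd_assoc (copp p)), cadd_opp, cadd_0. auto.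
Qed.
End CstarFacts.

Lemma Rle_of_le_eps a b : (forall eps, eps > 0 -> a <= b + eps) -> a <= b.
Proof.
  intros H. destruct (Rle_dec a b); auto. specialize (H ((a - b)/2)). lra.
Qed.
Lemma Rle_eps_eq0 a : 0 <= a -> (forall eps, eps > 0 -> a <= eps) -> a = 0.
Proof.
  intros H0 H. apply Rle_antisym; auto. apply Rle_of_le_eps. intros. rewrite Rplus_0_l. auto.
Qed.
Lemma pow_lt_eps q eps : 0 <= q < 1 -> eps > 0 -> exists N, forall n, (n >= N)%nat -> q ^ n < eps.
Proof.
  intros Hq He. destruct (pow_lt_1_zero q) with (y := eps) as [N HN]. rewrite Rabs_right; lra. auto.
  exists N. intros n Hn. specialize (HN n Hn). rewrite Rabs_right in HN. auto.
  apply Rle_ge, pow_le. lra.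
Qed.

Lemma pow_le_1 k m : 0 <= k <= 1 -> k ^ m <= 1.
Proof. intros H. induction m; simpl. lra. assert (0 <= k ^ m) by (apply pow_le; lra). nra. Qed.
Lemma pow_le_pow_decr k n m : 0 <= k <= 1 -> (n <= m)%nat -> k ^ m <= k ^ n.
Proof.
  intros H Hnm. replace m with (n + (m - n))%nat by lia. rewrite pow_add.
  pose proof (pow_le_1 k (m - n) H). assert (0 <= k ^ n) by (apply pow_le; lra). nra.
Qed.

Lemma Un_cv_pow_subseq (a : nat -> R) (K k : R) (g : nat -> nat) :
  0 <= K -> 0 <= k < 1 -> (forall n, (n <= g n)%nat) -> (forall n, 0 <= a n <= K * k ^ (g n)) ->
  Un_cv a 0.
Proof.
  intros HK Hk Hg Ha eps He.
  destruct (pow_lt_eps k (eps / (K + 1))) as [N HN]; auto.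
  { apply Rdiv_lt_0_compat; lra. }
  exists N. intros n Hn. unfold R_dist. rewrite Rminus_0_r. destruct (Ha n) as [H1 H2].
  rewrite Rabs_right by lra.
  assert (k ^ g n <= k ^ n) by (apply pow_le_pow_decr; [lra | apply Hg]).
  assert (k ^ n < eps / (K + 1)) by (apply HN; auto).
  assert (K * (eps / (K + 1)) < eps).
  { apply (Rmult_lt_reg_r (K + 1)). lra. unfold Rdiv. field_simplify; lra. }
  assert (K * k ^ g n <= K * (eps / (K + 1))) by (apply Rmult_le_compat_l; lra).
  lra.
Qed.

Section GeometricCauchy.
Variables (X : Type) (dist : X -> X -> R).
Hypothesis dist_refl : forall x, dist x x = 0.
Hypothesis dist_sym : forall x y, dist x y = dist y x.
Hypothesis dist_triangle : forall x y z, dist x z <= dist x y + dist y z.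
Variables (u : nat -> X) (K k : R).
Hypothesis k_range : 0 <= k < 1.
Hypothesis dist_step : forall n, dist (u n) (u (S n)) <= K * k ^ n.

Lemma dist_ge0 x y : 0 <= dist x y.
Proof. pose proof (dist_triangle x y x). rewrite dist_refl, (dist_sym y x) in H. lra. Qed.

Lemma geometric_step_ge0 : 0 <= K.
Proof. pose proof (dist_step 0). pose proof (dist_ge0 (u 0) (u 1)). simpl in H. lra. Qed.

Lemma geometric_dist_le m j : dist (u m) (u (j + m)) <= K * k ^ m / (1 - k).
Proof.
  pose proof geometric_step_ge0 as HK.
  assert (Hkm : 0 <= k ^ m) by (apply pow_le; lra).
  apply Rle_trans with (K * k ^ m * (1 - k ^ j) / (1 - k)).
  - induction j.
    + simpl. rewrite dist_refl. replace (K * k ^ m * (1 - 1) / (1 - k)) with 0 by (field; lra). lra.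
    + eapply Rle_trans. apply (dist_triangle _ (u (j + m)%nat)).
      pose proof (dist_step (j + m)). simpl in H |- *. rewrite pow_add in H.
      apply Rle_trans with (K * k ^ m * (1 - k ^ j) / (1 - k) + K * (k ^ j * k ^ m)). lra.
      right. field. lra.
  - unfold Rdiv. apply Rmult_le_compat_r. left; apply Rinv_0_lt_compat; lra.
    assert (0 <= k ^ j) by (apply pow_le; lra). assert (0 <= K * k ^ m) by (apply Rmult_le_pos; lra). nra.
Qed.

Lemma geometric_cauchy eps : eps > 0 ->
  exists N, forall n m, (n >= N)%nat -> (m >= N)%nat -> dist (u n) (u m) < eps.
Proof.
  intros He. pose proof geometric_step_ge0 as HK.
  destruct (pow_lt_eps k (eps * (1 - k) / (K + 1))) as [N HN]; auto.
  { apply Rdiv_lt_0_compat; [apply Rmult_lt_0_compat|]; lra. }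
  assert (Hfar : forall i j, (i >= N)%nat -> (j >= i)%nat -> dist (u i) (u j) < eps).
  { intros i j Hi Hj. replace j with ((j - i) + i)%nat by lia.
    eapply Rle_lt_trans. apply geometric_dist_le.
    specialize (HN i Hi). assert (0 <= k ^ i) by (apply pow_le; lra).
    apply (Rmult_lt_reg_r (1 - k)). lra. unfold Rdiv. rewrite Rmult_assoc, Rinv_l, Rmult_1_r by lra.
    apply Rle_lt_trans with ((K + 1) * k ^ i). nra.
    apply (Rmult_lt_compat_l (K + 1)) in HN; [|lra]. unfold Rdiv in HN.
    replace ((K + 1) * (eps * (1 - k) * / (K + 1))) with (eps * (1 - k)) in HN by (field; lra). lra. }
  exists N. intros n m Hn Hm. destruct (Nat.le_ge_cases n m).
  - apply Hfar; lia.
  - rewrite dist_sym. apply Hfar; lia.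
Qed.
End GeometricCauchy.

Section SumsAndInverses.
Context {A : CstarAlgebra}.
Implicit Types a b c : A.

Fixpoint asum (F : nat -> A) (n : nat) : A :=
  match n with O => czero | S k => cadd (asum F k) (F k) end.
Fixpoint rsum (f : nat -> R) (n : nat) : R :=
  match n with O => 0 | S k => rsum f k + f k end.
Fixpoint csum (f : nat -> Cx) (n : nat) : Cx :=
  match n with O => Czero | S k => Cadd (csum f k) (f k) end.

Lemma asum_ext F G n : (forall j, (j < n)%nat -> F j = G j) -> asum F n = asum G n.
Proof.
  induction n; simpl; intros H; auto. rewrite IHn by (intros; apply H; lia). rewrite H by lia. auto.
Qed.
Lemma asum_add F G n : asum (fun j => cadd (F j) (G j)) n = cadd (asum F n) (asum G n).
Proof.
  induction n; simpl. rewrite cadd_0; auto. rewrite IHn.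
  rewrite <- !cadd_assoc. f_equal. rewrite !cadd_assoc. f_equal. apply cadd_comm.
Qed.
Lemma asum_opp F n : asum (fun j => copp (F j)) n = copp (asum F n).
Proof. induction n; simpl. rewrite oppr0; auto. rewrite IHn, oppD. auto. Qed.
Lemma asum_sub F G n : asum (fun j => csub (F j) (G j)) n = csub (asum F n) (asum G n).
Proof. unfold csub. rewrite asum_add, asum_opp. auto. Qed.
Lemma asum_mull c F n : asum (fun j => cmul c (F j)) n = cmul c (asum F n).
Proof. induction n; simpl. rewrite mulr0; auto. rewrite IHn, cmul_addr. auto. Qed.
Lemma asum_mulr c F n : asum (fun j => cmul (F j) c) n = cmul (asum F n) c.
Proof. induction n; simpl. rewrite mul0r; auto. rewrite IHn, cmul_addl. auto. Qed.
Lemma asum_sc f n : asum (fun j => sc (f j)) n = sc (csum f n).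
Proof. induction n; simpl. rewrite sc_zero; auto. rewrite IHn, sc_add. auto. Qed.
Lemma asum_norm F n : cnorm (asum F n) <= rsum (fun j => cnorm (F j)) n.
Proof.
  induction n; simpl. rewrite cnorm0; lra.
  eapply Rle_trans. apply cnorm_triangle. lra.
Qed.
Lemma rsum_le f g n : (forall j, (j < n)%nat -> f j <= g j) -> rsum f n <= rsum g n.
Proof.
  induction n; simpl; intros H. lra. assert (f n <= g n) by (apply H; lia).
  assert (rsum f n <= rsum g n) by (apply IHn; intros; apply H; lia). lra.
Qed.
Lemma rsum_const (c : R) n : rsum (fun _ => c) n = INR n * c.
Proof. induction n; simpl. ring. rewrite IHn. destruct n; simpl; ring. Qed.
Lemma asum_norm_le F n (c : R) : (forall j, (j < n)%nat -> cnorm (F j) <= c) -> cnorm (asum F n) <= INR n * c.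
Proof.
  intros H. eapply Rle_trans. apply asum_norm. rewrite <- rsum_const. apply rsum_le. auto.
Qed.
Lemma asum_tele F n : asum (fun j => csub (F (S j)) (F j)) n = csub (F n) (F O).
Proof.
  induction n; simpl. unfold csub. rewrite addrN. auto.
  rewrite IHn. unfold csub. rewrite cadd_comm, <- cadd_assoc, (cadd_assoc (copp (F n))), cadd_opp, cadd_0. auto.
Qed.

Lemma cpow_succ_r (y : A) n : cpow y (S n) = cmul (cpow y n) y.
Proof.
  induction n; simpl. rewrite cmul_1l, cmul_1r. auto.
  simpl in IHn. rewrite IHn at 1. rewrite cmul_assoc. auto.
Qed.
Lemma cnorm_cpow_le (y : A) n : cnorm (cpow y n) <= cnorm y ^ n.
Proof.
  induction n; simpl. rewrite cnorm_one; lra.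
  eapply Rle_trans. apply cnorm_submult. apply Rmult_le_compat_l. apply cnorm_ge0. auto.
Qed.
Lemma cnorm_conj_cpow_le a b n : cnorm a <= 1 ->
  cnorm (cmul (cmul (cpow (cstar a) n) b) (cpow a n)) <= cnorm b * cnorm a ^ n.
Proof.
  intros Ha. pose proof (cnorm_ge0 a). pose proof (cnorm_ge0 b).
  pose proof (cnorm_cpow_le (cstar a) n) as H1. rewrite cnorm_star in H1.
  pose proof (cnorm_cpow_le a n) as H2.
  pose proof (cnorm_ge0 (cpow (cstar a) n)). pose proof (cnorm_ge0 (cpow a n)).
  assert (0 <= cnorm a ^ n <= 1) by (split; [apply pow_le | apply pow_le_1]; lra).
  eapply Rle_trans. apply cnorm_mul3_le.
  apply Rle_trans with (cnorm a ^ n * cnorm b * cnorm a ^ n).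
  - apply Rmult_le_compat; try apply Rmult_le_pos; try apply Rmult_le_compat_r; lra.
  - assert (0 <= cnorm b * cnorm a ^ n) by (apply Rmult_le_pos; lra).
    replace (cnorm a ^ n * cnorm b * cnorm a ^ n) with (cnorm a ^ n * (cnorm b * cnorm a ^ n)) by ring.
    nra.
Qed.
Lemma cpow_add (y : A) n m : cpow y (n + m) = cmul (cpow y n) (cpow y m).
Proof. induction n; simpl. rewrite cmul_1l; auto. rewrite IHn, cmul_assoc. auto. Qed.

Definition isinv a c := cmul a c = cone /\ cmul c a = cone.

(* A chosen two-sided inverse; a junk value when [a] is not invertible. *)
Definition inv (a : A) : A := epsilon (inhabits (@czero A)) (isinv a).
Lemma inv_unique a b c : cmul a b = cone -> cmul c a = cone -> b = c.
Proof.
  intros H1 H2. rewrite <- (cmul_1l b), <- H2, <- cmul_assoc, H1, cmul_1r. auto.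
Qed.
Lemma inv_eq a b : isinv a b -> inv a = b.
Proof.
  intros Hb. assert (Hi : isinv a (inv a)) by (unfold inv; apply epsilon_spec; exists b; auto).
  symmetry. apply (inv_unique a b (inv a)); [apply Hb | apply Hi].
Qed.
Lemma isinv_opp a b : isinv a b -> isinv (copp a) (copp b).
Proof. unfold isinv. intros. rewrite !mulNr, !mulrN, !oppK. auto. Qed.
Lemma invertible_opp a : invertible A a -> invertible A (copp a).
Proof. intros [b Hb]. exists (copp b). apply isinv_opp, Hb. Qed.

Lemma mul_subr c a b : cmul c (csub a b) = csub (cmul c a) (cmul c b).
Proof. unfold csub. rewrite cmul_addr, mulrN. auto. Qed.
Lemma mul_subl c a b : cmul (csub a b) c = csub (cmul a c) (cmul b c).
Proof. unfold csub. rewrite cmul_addl, mulNr. auto. Qed.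

Lemma one_sub_mul_geom_sum (y : A) n : cmul (csub cone y) (asum (cpow y) n) = csub cone (cpow y n).
Proof.
  induction n; simpl.
  - rewrite mulr0. unfold csub. rewrite addrN. auto.
  - rewrite cmul_addr, IHn, mul_subl, cmul_1l. unfold csub.
    rewrite <- cadd_assoc. f_equal. rewrite cadd_assoc, cadd_opp, cadd_0. auto.
Qed.
Lemma geom_sum_mul_one_sub (y : A) n : cmul (asum (cpow y) n) (csub cone y) = csub cone (cpow y n).
Proof.
  induction n; simpl.
  - rewrite mul0r. unfold csub. rewrite addrN. auto.
  - rewrite cmul_addl, IHn, mul_subr, cmul_1r, <- cpow_succ_r. unfold csub.
    rewrite <- cadd_assoc. f_equal. simpl. rewrite cadd_assoc, cadd_opp, cadd_0. auto.
Qed.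

Lemma eq_of_cnorm_sub_le_eps a b : (forall eps, eps > 0 -> cnorm (csub a b) <= eps) -> a = b.
Proof. intros H. apply cnorm_sub_eq0, Rle_eps_eq0; [apply cnorm_ge0 | exact H]. Qed.

Lemma geom_sum_converges (y : A) : cnorm y < 1 ->
  exists l, (forall eps, eps > 0 -> exists N, forall n, (n >= N)%nat -> cnorm (csub (asum (cpow y) n) l) < eps)
    /\ cnorm l <= 1 / (1 - cnorm y).
Proof.
  intros Hy. pose proof (cnorm_ge0 y) as Hq0. set (q := cnorm y) in *.
  set (sums := asum (cpow y)).
  set (dist := fun a b : A => cnorm (csub a b)).
  assert (Hrefl : forall a, dist a a = 0) by (intros; unfold dist, csub; rewrite addrN; apply cnorm0).
  assert (Hsym : forall a b, dist a b = dist b a) by (intros; apply cnorm_subC).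
  assert (Htri : forall a b c, dist a c <= dist a b + dist b c) by (intros; apply cnorm_sub_triangle).
  assert (Hstep : forall n, dist (sums n) (sums (S n)) <= 1 * q ^ n).
  { intros n. unfold dist, sums. simpl asum. rewrite cnorm_subC, Rmult_1_l.
    replace (csub (cadd (asum (cpow y) n) (cpow y n)) (asum (cpow y) n)) with (cpow y n).
    - apply cnorm_cpow_le.
    - unfold csub. rewrite (cadd_comm (asum _ _)), <- cadd_assoc, addrN, addr0. auto. }
  destruct (ccomplete sums) as [l Hl].
  { intros eps He. exact (geometric_cauchy A dist Hrefl Hsym Htri sums 1 q ltac:(lra) Hstep eps He). }
  exists l. split; [exact Hl |].
  apply Rle_of_le_eps. intros eps He. destruct (Hl eps He) as [N HN]. specialize (HN N (le_n N)).
  pose proof (geometric_dist_le A dist Hrefl Hsym Htri sums 1 q ltac:(lra) Hstep 0 N) as H.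
  rewrite Nat.add_0_r in H. unfold dist, sums, csub in H. simpl in H.
  rewrite cadd_0, cnormN, Rmult_1_l in H.
  pose proof (cnorm_sub_ge l (sums N)). rewrite cnorm_subC in H0. unfold csub, sums in H0. unfold sums in HN. lra.
Qed.

(* Neumann series: the limit of [sum_{j<n} y^j] inverts [1 - y] because
   [(1 - y) (sum_{j<n} y^j) = 1 - y^n = (sum_{j<n} y^j) (1 - y)]. *)
Lemma isinv_one_sub (y : A) : cnorm y < 1 ->
  exists b, isinv (csub cone y) b /\ cnorm b <= 1 / (1 - cnorm y).
Proof.
  intros Hy. pose proof (cnorm_ge0 y) as Hq0.
  destruct (geom_sum_converges y Hy) as [l [Hl Hln]].
  assert (Hlim : forall eps, eps > 0 ->
    exists n, cnorm (csub l (asum (cpow y) n)) < eps /\ cnorm (cpow y n) < eps).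
  { intros eps He. destruct (Hl eps He) as [N1 H1]. destruct (pow_lt_eps (cnorm y) eps) as [N2 H2]; [lra | auto |].
    exists (N1 + N2)%nat. rewrite cnorm_subC. split. apply H1; lia.
    eapply Rle_lt_trans. apply cnorm_cpow_le. apply H2; lia. }
  assert (H1y : cnorm (csub cone y) <= 2).
  { eapply Rle_trans. apply cnorm_sub_le. rewrite cnorm_one. lra. }
  assert (Hpow : forall n, csub (csub cone (cpow y n)) cone = copp (cpow y n)).
  { intros n. unfold csub. rewrite cadd_comm, cadd_assoc, cadd_opp, cadd_0. auto. }
  exists l. split; [split |]; auto.
  - apply eq_of_cnorm_sub_le_eps. intros eps He.
    destruct (Hlim (eps / 3)) as [n [Hn1 Hn2]]. lra.
    eapply Rle_trans. apply (cnorm_sub_triangle _ (cmul (csub cone y) (asum (cpow y) n))).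
    rewrite <- mul_subr, one_sub_mul_geom_sum, Hpow, cnormN.
    pose proof (cnorm_submult (csub cone y) (csub l (asum (cpow y) n))).
    pose proof (cnorm_ge0 (csub l (asum (cpow y) n))). nra.
  - apply eq_of_cnorm_sub_le_eps. intros eps He.
    destruct (Hlim (eps / 3)) as [n [Hn1 Hn2]]. lra.
    eapply Rle_trans. apply (cnorm_sub_triangle _ (cmul (asum (cpow y) n) (csub cone y))).
    rewrite <- mul_subl, geom_sum_mul_one_sub, Hpow, cnormN.
    pose proof (cnorm_submult (csub l (asum (cpow y) n)) (csub cone y)).
    pose proof (cnorm_ge0 (csub l (asum (cpow y) n))). nra.
Qed.
End SumsAndInverses.

(** * Resolvent bounds *)

Section Spectrum.
Context {A : CstarAlgebra}.
Implicit Types a b c e h : A.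

Lemma isinv_add_small a b e m : isinv a b -> cnorm b <= m -> 0 < m -> cnorm e <= 1 / (2 * m) ->
  exists c, isinv (cadd a e) c /\ cnorm c <= 2 * m.
Proof.
  intros [Hab Hba] Hb Hm He.
  set (y := copp (cmul b e)).
  assert (Hy : cnorm y <= 1/2).
  { unfold y. rewrite cnormN. eapply Rle_trans. apply cnorm_submult.
    pose proof (cnorm_ge0 b); pose proof (cnorm_ge0 e).
    apply Rle_trans with (m * (1 / (2 * m))). apply Rmult_le_compat; auto.
    right. field. lra. }
  destruct (isinv_one_sub y) as [d [[Hd1 Hd2] Hd3]]. lra.
  assert (E : cadd a e = cmul a (csub cone y)).
  { rewrite mul_subr, cmul_1r. unfold y, csub. rewrite mulrN, oppK, cmul_assoc, Hab, cmul_1l. auto. }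
  exists (cmul d b). split. split.
  - rewrite E, <- cmul_assoc, (cmul_assoc (csub cone y)), Hd1, cmul_1l. auto.
  - rewrite E, <- cmul_assoc, (cmul_assoc b), Hba, cmul_1l. auto.
  - eapply Rle_trans. apply cnorm_submult.
    assert (cnorm d <= 2).
    { eapply Rle_trans. apply Hd3. apply Rle_trans with (1 / (1 - 1/2)).
      apply Rmult_le_compat_l. lra. apply Rinv_le_contravar; lra. lra. }
    pose proof (cnorm_ge0 d); pose proof (cnorm_ge0 b). nra.
Qed.

Lemma isinv_sc_sub (mu : Cx) a : cnorm a < Cmod mu ->
  exists c, isinv (csub (sc mu) a) c /\ cnorm c <= 1 / (Cmod mu - cnorm a).
Proof.
  intros H. pose proof (cnorm_ge0 a).
  assert (Hmu : mu <> Czero) by (intro E; rewrite E, Cmod_zero in H; lra).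
  set (nu := Cinv mu).
  assert (Hnu : Cmod nu = / Cmod mu) by (apply Cmod_Cinv; auto).
  assert (Hmn : Cmul mu nu = Cone) by (apply Cinv_r; auto).
  set (y := cmul (sc nu) a).
  assert (Hy : cnorm y = cnorm a / Cmod mu).
  { unfold y. rewrite sc_mull, cnorm_scal, Hnu. unfold Rdiv. ring. }
  destruct (isinv_one_sub y) as [d [[Hd1 Hd2] Hd3]].
  { rewrite Hy. apply (Rmult_lt_reg_r (Cmod mu)). lra. unfold Rdiv.
    rewrite Rmult_assoc, Rinv_l by lra. lra. }
  assert (E : csub (sc mu) a = cmul (sc mu) (csub cone y)).
  { rewrite mul_subr, cmul_1r. unfold y. rewrite cmul_assoc, <- sc_mul, Hmn, sc_one, cmul_1l. auto. }
  exists (cmul d (sc nu)). split. split.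
  - rewrite E, <- cmul_assoc, (cmul_assoc (csub cone y)), Hd1, cmul_1l, <- sc_mul, Hmn, sc_one. auto.
  - rewrite E, <- cmul_assoc, (cmul_assoc (sc nu)), <- sc_mul, Cmul_comm, Hmn, sc_one, cmul_1l. auto.
  - eapply Rle_trans. apply cnorm_submult. rewrite sc_norm, Hnu.
    rewrite Hy in Hd3.
    assert (0 < Cmod mu) by lra.
    replace (1 / (1 - cnorm a / Cmod mu)) with (Cmod mu / (Cmod mu - cnorm a)) in Hd3 by (field; lra).
    replace (1 / (Cmod mu - cnorm a)) with (Cmod mu / (Cmod mu - cnorm a) * / Cmod mu) by (field; lra).
    apply Rmult_le_compat_r. left; apply Rinv_0_lt_compat; lra. auto.
Qed.

Lemma spectrum_norm_le a z : spectrum A a z -> Cmod z <= cnorm a.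
Proof.
  intros Hs. destruct (Rle_dec (Cmod z) (cnorm a)); auto. exfalso. apply Hs.
  destruct (isinv_sc_sub z a) as [c [Hc _]]. lra.
  rewrite <- oppB. apply invertible_opp. exists c. exact Hc.
Qed.

Lemma Cmod_imag s : Cmod (mkC 0 s) = Rabs s.
Proof. rewrite <- Cmod_RC. unfold Cmod; simpl. f_equal. ring. Qed.

(* With [s = (|h|^2 + 1) / Im lam] the C*-identity gives [|h + i s|^2 <= |h|^2 + s^2 < |lam + i s|^2],
   so [lam - h = (lam + i s) - (h + i s)] is inverted by a Neumann series. *)
Lemma selfadjoint_nonreal_resolvent h (lam : Cx) : cstar h = h -> Im lam <> 0 ->
  exists c, isinv (csub (sc lam) h) c /\ cnorm c <= Cmod lam + (cnorm h * cnorm h + 1) / Rabs (Im lam).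
Proof.
  intros Hh Hb. set (t := cnorm h). set (b := Im lam). set (s := (t * t + 1) / b).
  assert (Hbs : b * s = t * t + 1) by (unfold s; field; auto).
  set (is := mkC 0 s). set (mu := Cadd lam is). set (a := cadd h (sc is)).
  assert (E : csub (sc lam) h = csub (sc mu) a).
  { unfold mu, a, csub. rewrite sc_add, oppD, <- !cadd_assoc. f_equal.
    rewrite (cadd_comm (sc is)), <- cadd_assoc, cadd_opp, addr0. auto. }
  assert (Ha2 : cnorm a * cnorm a <= t * t + s * s).
  { rewrite <- cnorm_cstar. unfold a. rewrite cstar_add, Hh, star_sc.
    replace (Cconj is) with (Copp is) by (unfold is; cx).
    rewrite sc_opp, !cmul_addl, !cmul_addr, mulNr, mulNr, <- sc_comm, <- sc_mul.
    replace (Cmul is is) with (RC (- (s * s))) by (unfold is, RC; cx).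
    replace (cadd (cadd (cmul h h) (cmul (sc is) h)) (cadd (copp (cmul (sc is) h)) (copp (sc (RC (- (s * s)))))))
      with (cadd (cmul h h) (copp (sc (RC (- (s * s)))))).
    eapply Rle_trans. apply cnorm_triangle. rewrite cnormN, sc_norm, Cmod_RC.
    pose proof (cnorm_submult h h). fold t in H. rewrite Rabs_left1.
    pose proof (Rle_0_sqr s). unfold Rsqr in H0. lra. pose proof (Rle_0_sqr s). unfold Rsqr in H0. lra.
    rewrite <- !cadd_assoc. f_equal. rewrite !cadd_assoc, addrN, cadd_0. auto. }
  assert (Hmu2 : Cmod mu * Cmod mu >= 2 * (t * t + 1) + s * s).
  { rewrite Cmod_sq. unfold mu, is; simpl. fold b. nra. }
  pose proof (cnorm_ge0 a). pose proof (Cmod_ge0 mu).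
  assert (Hlt : cnorm a < Cmod mu).
  { destruct (Rlt_dec (cnorm a) (Cmod mu)); auto. pose proof (Rle_0_sqr t). unfold Rsqr in H1. nra. }
  destruct (isinv_sc_sub mu a Hlt) as [c [Hc Hcn]].
  exists c. split. rewrite E; auto.
  eapply Rle_trans. apply Hcn.
  assert (1 / (Cmod mu - cnorm a) <= Cmod mu).
  { assert (0 < Cmod mu - cnorm a) by lra.
    apply (Rmult_le_reg_r (Cmod mu - cnorm a)); auto. unfold Rdiv. rewrite Rmult_1_l, Rinv_l by lra.
    pose proof (Rle_0_sqr t). unfold Rsqr in H2. nra. }
  eapply Rle_trans. apply H1. unfold mu. eapply Rle_trans. apply Cmod_triangle.
  apply Rplus_le_compat_l. unfold is. rewrite Cmod_imag. unfold s. unfold Rdiv.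
  rewrite Rabs_mult, Rabs_right. rewrite Rabs_inv. right; auto.
  pose proof (Rle_0_sqr t). unfold Rsqr in H2. lra.
Qed.

Lemma selfadjoint_spectrum_real h z : cstar h = h -> spectrum A h z -> Im z = 0.
Proof.
  intros Hh Hs. destruct (Req_dec (Im z) 0); auto. exfalso. apply Hs.
  destruct (selfadjoint_nonreal_resolvent h z Hh H) as [c [Hc _]].
  rewrite <- oppB. apply invertible_opp. exists c. exact Hc.
Qed.
End Spectrum.

(** * Roots of unity *)

Definition root_angle (N : nat) : R := 2 * PI / INR N.
Definition root1 (N : nat) : Cx := mkC (cos (root_angle N)) (sin (root_angle N)).

Lemma root1_pow N j : Cpow (root1 N) j = mkC (cos (INR j * root_angle N)) (sin (INR j * root_angle N)).
Proof.
  induction j; simpl Cpow. simpl INR. rewrite Rmult_0_l, cos_0, sin_0. reflexivity.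
  rewrite IHj. rewrite S_INR. replace ((INR j + 1) * root_angle N) with (root_angle N + INR j * root_angle N) by ring.
  apply Ceq; simpl. rewrite cos_plus; ring. rewrite sin_plus; ring.
Qed.
Lemma root1_pow_N N : (N > 0)%nat -> Cpow (root1 N) N = Cone.
Proof.
  intros H. rewrite root1_pow. unfold root_angle. replace (INR N * (2 * PI / INR N)) with (2 * PI).
  rewrite cos_2PI, sin_2PI. reflexivity. field. apply not_0_INR. lia.
Qed.
Lemma Cmod_root1_pow N j : Cmod (Cpow (root1 N) j) = 1.
Proof.
  rewrite root1_pow. unfold Cmod; simpl. rewrite <- sqrt_1. f_equal.
  pose proof (sin2_cos2 (INR j * root_angle N)). unfold Rsqr in H. lra.
Qed.
Lemma root1_pow_neq1 N m : (0 < m < N)%nat -> Cpow (root1 N) m <> Cone.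
Proof.
  intros H E. rewrite root1_pow in E. injection E as E1 E2.
  assert (HN : 0 < INR N) by (apply lt_0_INR; lia).
  assert (Hm : 0 < INR m) by (apply lt_0_INR; lia).
  assert (Hmn : INR m < INR N) by (apply lt_INR; lia).
  assert (Ht : 0 < INR m * root_angle N < 2 * PI).
  { unfold root_angle. split. pose proof PI_RGT_0. apply Rmult_lt_0_compat; auto. unfold Rdiv.
    apply Rmult_lt_0_compat; [lra|]. apply Rinv_0_lt_compat; auto.
    replace (INR m * (2 * PI / INR N)) with (2 * PI * (INR m / INR N)) by (field; lra).
    pose proof PI_RGT_0. rewrite <- (Rmult_1_r (2 * PI)) at 2. apply Rmult_lt_compat_l. lra.
    apply (Rmult_lt_reg_r (INR N)); auto. unfold Rdiv. rewrite Rmult_assoc, Rinv_l; lra. }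
  destruct (sin_eq_O_2PI_0 (INR m * root_angle N)) as [H0 | [H0 | H0]]; try lra.
  rewrite H0, cos_PI in E1. lra.
Qed.

Lemma Cpow_comm z m j : Cpow (Cpow z m) j = Cpow (Cpow z j) m.
Proof. rewrite <- !Cpow_mul, Nat.mul_comm. auto. Qed.

Lemma csum_geom z N : Cmul (Csub z Cone) (csum (Cpow z) N) = Csub (Cpow z N) Cone.
Proof.
  induction N; simpl. cx. replace (Cmul (Csub z Cone) (Cadd (csum (Cpow z) N) (Cpow z N)))
    with (Cadd (Cmul (Csub z Cone) (csum (Cpow z) N)) (Cmul (Csub z Cone) (Cpow z N))) by cx.
  rewrite IHN. cx.
Qed.

Lemma sum_root1_pow N m : (0 < m < N)%nat -> csum (fun j => Cpow (Cpow (root1 N) m) j) N = Czero.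
Proof.
  intros H. set (z := Cpow (root1 N) m).
  assert (Hz : z <> Cone) by (apply root1_pow_neq1; auto).
  assert (HzN : Cpow z N = Cone) by (unfold z; rewrite Cpow_comm, root1_pow_N, Cpow_one; auto; lia).
  pose proof (csum_geom z N). rewrite HzN in H0.
  replace (Csub Cone Cone) with Czero in H0 by cx.
  assert (Hz1 : Csub z Cone <> Czero).
  { intro E. apply Hz. apply Ceq. pose proof (f_equal Re E). simpl in H1; simpl; lra.
    pose proof (f_equal Im E). simpl in H1; simpl; lra. }
  transitivity (Cmul (Cmul (Cinv (Csub z Cone)) (Csub z Cone)) (csum (Cpow z) N)).
  rewrite (Cmul_comm (Cinv _)), Cinv_r by auto. rewrite Cmul_1l. reflexivity.
  rewrite <- Cmul_assoc, H0. cx.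
Qed.

Lemma Cmod_one_sub_root1_pos N : (N >= 2)%nat -> 0 < Cmod (Csub Cone (root1 N)).
Proof.
  intros HN. pose proof (Cmod_ge0 (Csub Cone (root1 N))).
  destruct (Req_dec (Cmod (Csub Cone (root1 N))) 0) as [H0|H0]; [|lra].
  apply Cmod_eq0 in H0. exfalso. apply (root1_pow_neq1 N 1); [lia |].
  simpl. rewrite Cmul_1r. apply Ceq.
  - pose proof (f_equal Re H0). simpl in *. lra.
  - pose proof (f_equal Im H0). simpl in *. lra.
Qed.

Lemma Cmod_one_sub_root1_le N : (N >= 4)%nat -> Cmod (Csub Cone (root1 N)) <= 2 * PI / INR N.
Proof.
  intros H. assert (HN : 4 <= INR N) by (replace 4 with (INR 4) by (simpl; ring); apply le_INR; lia).
  assert (Hth : 0 < root_angle N <= PI / 2).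
  { unfold root_angle. pose proof PI_RGT_0. split. unfold Rdiv. apply Rmult_lt_0_compat. lra.
    apply Rinv_0_lt_compat; lra. apply (Rmult_le_reg_r (INR N)). lra.
    unfold Rdiv. rewrite Rmult_assoc, Rinv_l by lra. nra. }
  pose proof (cos_bound (root_angle N) 0). simpl (2 * 0 + 1)%nat in H0.
  destruct H0 as [H0 _]. pose proof PI_RGT_0. lra. lra.
  replace (cos_approx (root_angle N) 1) with (1 - root_angle N * root_angle N / 2) in H0 by
    (unfold cos_approx, cos_term; simpl; field).
  apply Cmod_le_of_sq. unfold root_angle in *. lra.
  simpl. pose proof (sin2_cos2 (root_angle N)). unfold Rsqr in H1.
  fold (root_angle N). nra.
Qed.

Lemma csum_scale c g N : csum (fun j => Cmul c (g j)) N = Cmul c (csum g N).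
Proof. induction N; simpl. cx. rewrite IHN. cx. Qed.
Lemma csum_const1 N : csum (fun _ => Cone) N = RC (INR N).
Proof. induction N; simpl csum. cx. rewrite IHN, S_INR. unfold RC. cx. Qed.

Lemma csum_ext g h N : (forall j, g j = h j) -> csum g N = csum h N.
Proof. intros H. induction N; simpl; auto. rewrite IHN, H. auto. Qed.

(** * A discrete Cauchy estimate *)

(* With [lam_j = r w^j], [w] a primitive [N]-th root of unity, and [k < N],
   [sum_j lam_j^(k+1) R(lam_j) = N x^k + x^(k+1) sum_j R(lam_j)].  The resolvent identity shows
   that [sum_j R(lam_j)] changes only by an [N]-independent amount when [r] grows from [rho] to a
   large radius, where it is [O(N / r)]. *)
Section DiscreteCauchyEstimate.
Context {A : CstarAlgebra}.
Variables (x : A) (rho M : R) (res : Cx -> A).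
Hypothesis Hrho : 0 < rho.
Hypothesis HM : 0 <= M.
Hypothesis res_spec : forall lam, rho <= Cmod lam -> isinv (csub (sc lam) x) (res lam) /\ cnorm (res lam) <= M.

Lemma res_sub lam mu : rho <= Cmod lam -> rho <= Cmod mu ->
  csub (res lam) (res mu) = cmul (sc (Csub mu lam)) (cmul (res lam) (res mu)).
Proof.
  intros H1 H2. destruct (res_spec lam H1) as [[Ha1 Ha2] _]. destruct (res_spec mu H2) as [[Hb1 Hb2] _].
  transitivity (cmul (cmul (res lam) (csub (csub (sc mu) x) (csub (sc lam) x))) (res mu)).
  - rewrite mul_subr, mul_subl, Ha2, <- cmul_assoc, Hb1, cmul_1r, cmul_1l. auto.
  - rewrite sub_sub_cancel, <- sc_sub, <- sc_comm, <- cmul_assoc. auto.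
Qed.

Lemma res_sub_norm_le lam mu : rho <= Cmod lam -> rho <= Cmod mu ->
  cnorm (csub (res lam) (res mu)) <= Cmod (Csub mu lam) * (M * M).
Proof.
  intros H1 H2. rewrite res_sub by auto. eapply Rle_trans. apply cnorm_submult.
  rewrite sc_norm. apply Rmult_le_compat_l. apply Cmod_ge0.
  eapply Rle_trans. apply cnorm_submult. destruct (res_spec _ H1) as [_ B1]. destruct (res_spec _ H2) as [_ B2].
  apply Rmult_le_compat; auto; apply cnorm_ge0.
Qed.

Definition circle_pt (r : R) (N j : nat) : Cx := Cmul (RC r) (Cpow (root1 N) j).
Definition res_at (r : R) (N j : nat) : A := res (circle_pt r N j).
Definition res_sum (r : R) (N : nat) : A := asum (res_at r N) N.
Definition res_sq_sum (r : R) (N : nat) : A :=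
  asum (fun j => cmul (sc (Cpow (root1 N) j)) (cmul (res_at r N j) (res_at r N j))) N.

Lemma Cmod_circle_pt r N j : 0 <= r -> Cmod (circle_pt r N j) = r.
Proof. intros. unfold circle_pt. rewrite Cmod_mul, Cmod_root1_pow, Cmod_RC, Rabs_right; lra. Qed.

Lemma circle_pt_in r N j : rho <= r -> rho <= Cmod (circle_pt r N j).
Proof. intros. rewrite Cmod_circle_pt; lra. Qed.

(* [sum_j (R(lam_(j+1)) - R(lam_j))] telescopes to [0]; by the resolvent identity it equals
   [r (1 - w)] times [res_sq_sum] up to terms of second order in [|lam_(j+1) - lam_j|]. *)
Lemma res_sq_sum_norm_le r N : rho <= r -> (N >= 2)%nat ->
  cnorm (res_sq_sum r N) <= INR N * (r * Cmod (Csub Cone (root1 N))) * (M * M * M).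
Proof.
  intros Hr HN. set (kap := Cmod (Csub Cone (root1 N))).
  assert (Hkap : 0 < kap) by (apply Cmod_one_sub_root1_pos; lia).
  set (gc := Cmul (RC r) (Csub Cone (root1 N))).
  assert (Hgc : Cmod gc = r * kap). { unfold gc. rewrite Cmod_mul, Cmod_RC, Rabs_right; auto; lra. }
  set (D := fun j => csub (res_at r N (S j)) (res_at r N j)).
  assert (Hc : forall j, Csub (circle_pt r N j) (circle_pt r N (S j)) = Cmul gc (Cpow (root1 N) j)).
  { intros j. unfold gc, circle_pt. simpl Cpow. cx. }
  assert (HD : forall j, D j = cadd (cmul (sc gc) (cmul (sc (Cpow (root1 N) j)) (cmul (res_at r N j) (res_at r N j))))
                                  (cmul (sc (Csub (circle_pt r N j) (circle_pt r N (S j)))) (cmul (D j) (res_at r N j)))).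
  { intros j. unfold D at 1, res_at at 1 2. rewrite res_sub by (apply circle_pt_in; auto). fold (res_at r N (S j)) (res_at r N j).
    rewrite <- (add_sub_cancel (res_at r N (S j)) (res_at r N j)) at 1. fold (D j).
    rewrite cmul_addl, cmul_addr. f_equal. rewrite Hc, sc_mul, <- cmul_assoc. auto. }
  assert (Hsum : asum D N = czero).
  { unfold D. rewrite asum_tele. unfold res_at, circle_pt. rewrite root1_pow_N by lia. simpl Cpow.
    unfold csub. apply addrN. }
  assert (E : cmul (sc gc) (res_sq_sum r N) =
     copp (asum (fun j => cmul (sc (Csub (circle_pt r N j) (circle_pt r N (S j)))) (cmul (D j) (res_at r N j))) N)).
  { apply opp_unique. rewrite <- Hsum. unfold res_sq_sum. rewrite <- asum_mull, <- asum_add.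
    apply asum_ext. intros j _. symmetry. rewrite HD at 1. apply cadd_comm. }
  assert (HE : cnorm (cmul (sc gc) (res_sq_sum r N)) <= INR N * ((r * kap) * (((r * kap) * (M * M)) * M))).
  { rewrite E, cnormN. apply asum_norm_le. intros j Hj.
    eapply Rle_trans. apply cnorm_submult. rewrite sc_norm, Hc, Cmod_mul, Cmod_root1_pow, Hgc, Rmult_1_r.
    assert (0 <= r * kap) by (apply Rmult_le_pos; lra).
    apply Rmult_le_compat_l; auto. eapply Rle_trans. apply cnorm_submult.
    apply Rmult_le_compat. apply cnorm_ge0. apply cnorm_ge0.
    unfold D. eapply Rle_trans. apply res_sub_norm_le; apply circle_pt_in; auto.
    replace (Csub (circle_pt r N j) (circle_pt r N (S j))) with (Cmul gc (Cpow (root1 N) j)) by (symmetry; apply Hc).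
    rewrite Cmod_mul, Cmod_root1_pow, Hgc, Rmult_1_r. lra.
    apply res_spec, circle_pt_in; auto. }
  rewrite sc_mull, cnorm_scal, Hgc in HE.
  assert (0 < r * kap) by (apply Rmult_lt_0_compat; lra).
  apply (Rmult_le_reg_l (r * kap)); auto.
  pose proof (pos_INR N). nra.
Qed.

Lemma res_sum_step_le r d N : rho <= r -> 0 <= d -> (N >= 2)%nat ->
  cnorm (csub (res_sum (r + d) N) (res_sum r N)) <=
  INR N * d * (r * Cmod (Csub Cone (root1 N)) + d) * (M * M * M).
Proof.
  intros Hr Hd HN. set (kap := Cmod (Csub Cone (root1 N))).
  assert (Hin : forall j, rho <= Cmod (circle_pt r N j)) by (intros; apply circle_pt_in; auto).
  assert (Hin' : forall j, rho <= Cmod (circle_pt (r + d) N j)) by (intros; apply circle_pt_in; lra).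
  assert (Hc : forall j, Csub (circle_pt r N j) (circle_pt (r + d) N j) = Cmul (RC (- d)) (Cpow (root1 N) j)).
  { intros j. unfold circle_pt, RC. cx. }
  assert (E : csub (res_sum (r + d) N) (res_sum r N) =
    cadd (cmul (sc (RC (- d))) (res_sq_sum r N))
         (asum (fun j => cmul (sc (Csub (circle_pt r N j) (circle_pt (r + d) N j)))
                  (cmul (csub (res_at (r + d) N j) (res_at r N j)) (res_at r N j))) N)).
  { unfold res_sum, res_sq_sum. rewrite <- asum_sub, <- asum_mull, <- asum_add. apply asum_ext. intros j _.
    unfold res_at at 1 2. rewrite res_sub by auto. fold (res_at (r + d) N j) (res_at r N j).
    rewrite <- (add_sub_cancel (res_at (r + d) N j) (res_at r N j)) at 1.
    rewrite cmul_addl, cmul_addr. f_equal. rewrite Hc, sc_mul, <- cmul_assoc. auto. }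
  rewrite E. eapply Rle_trans. apply cnorm_triangle.
  pose proof (res_sq_sum_norm_le r N Hr HN) as HT. fold kap in HT.
  assert (H1 : cnorm (cmul (sc (RC (- d))) (res_sq_sum r N)) <= d * (INR N * (r * kap) * (M * M * M))).
  { rewrite sc_mull, cnorm_scal, Cmod_RC, Rabs_left1 by lra. rewrite Ropp_involutive.
    apply Rmult_le_compat_l; auto. }
  assert (H2 : cnorm (asum (fun j => cmul (sc (Csub (circle_pt r N j) (circle_pt (r + d) N j)))
                  (cmul (csub (res_at (r + d) N j) (res_at r N j)) (res_at r N j))) N) <= INR N * (d * ((d * (M * M)) * M))).
  { apply asum_norm_le. intros j _. eapply Rle_trans. apply cnorm_submult.
    rewrite sc_norm, Hc, Cmod_mul, Cmod_root1_pow, Cmod_RC, Rabs_left1, Ropp_involutive, Rmult_1_r by lra.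
    apply Rmult_le_compat_l; auto. eapply Rle_trans. apply cnorm_submult.
    apply Rmult_le_compat. apply cnorm_ge0. apply cnorm_ge0.
    unfold res_at. eapply Rle_trans. apply res_sub_norm_le; auto.
    rewrite <- Cmod_opp. replace (Copp (Csub (circle_pt r N j) (circle_pt (r + d) N j))) with (Cmul (RC d) (Cpow (root1 N) j)).
    rewrite Cmod_mul, Cmod_root1_pow, Cmod_RC, Rabs_right by lra. lra.
    unfold circle_pt, RC. cx. apply res_spec; auto. }
  pose proof (pos_INR N). nra.
Qed.

Lemma res_sum_radial_le R N K : rho <= R -> (N >= 2)%nat -> (K >= 1)%nat ->
  cnorm (csub (res_sum R N) (res_sum rho N)) <=
  INR N * (R - rho) * (R * Cmod (Csub Cone (root1 N)) + (R - rho) / INR K) * (M * M * M).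
Proof.
  intros HR HN HK. set (kap := Cmod (Csub Cone (root1 N))). set (d := (R - rho) / INR K).
  assert (HKp : 0 < INR K) by (apply lt_0_INR; lia).
  assert (Hd : 0 <= d) by (unfold d; apply Rmult_le_pos; [lra | left; apply Rinv_0_lt_compat; auto]).
  assert (HKd : INR K * d = R - rho) by (unfold d; field; lra).
  assert (Hkap : 0 <= kap) by apply Cmod_ge0.
  assert (forall i, (i <= K)%nat -> cnorm (csub (res_sum (rho + INR i * d) N) (res_sum rho N)) <=
            INR i * (INR N * d * (R * kap + d) * (M * M * M))).
  { induction i; intros Hi.
    - simpl. rewrite Rmult_0_l, Rplus_0_r. unfold csub. rewrite addrN, cnorm0. lra.
    - assert (Hi' : INR i + 1 <= INR K) by (rewrite <- S_INR; apply le_INR; lia).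
      assert (HiR : rho + INR i * d <= R) by nra.
      pose proof (pos_INR i).
      eapply Rle_trans. apply (cnorm_sub_triangle _ (res_sum (rho + INR i * d) N)).
      rewrite S_INR. replace (rho + (INR i + 1) * d) with ((rho + INR i * d) + d) by ring.
      eapply Rle_trans. apply Rplus_le_compat. apply res_sum_step_le; auto. nra. apply IHi; lia.
      fold kap. assert (0 <= M * M * M) by (apply Rmult_le_pos; [apply Rmult_le_pos|]; auto).
      pose proof (pos_INR N).
      assert ((rho + INR i * d) * kap <= R * kap) by (apply Rmult_le_compat_r; auto).
      assert (0 <= INR N * d) by (apply Rmult_le_pos; auto).
      assert (INR N * d * ((rho + INR i * d) * kap + d) * (M * M * M) <= INR N * d * (R * kap + d) * (M * M * M)).
      { apply Rmult_le_compat_r; auto. apply Rmult_le_compat_l; auto. lra. }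
      lra. }
  specialize (H K (le_n K)). replace (rho + INR K * d) with R in H by lra.
  eapply Rle_trans. apply H. right. fold d. rewrite <- HKd. ring.
Qed.

Lemma res_sum_far_le R N : rho <= R -> (N >= 2)%nat ->
  cnorm (res_sum R N) <= INR N * (/ R * (cnorm x * M)).
Proof.
  intros HR HN. set (nu := fun j => Cmul (RC (/ R)) (Cpow (Cpow (root1 N) (N - 1)) j)).
  assert (HRp : 0 < R) by lra.
  assert (Hnu : forall j, Cmul (circle_pt R N j) (nu j) = Cone).
  { intros j. unfold circle_pt, nu.
    replace (Cmul (Cmul (RC R) (Cpow (root1 N) j)) (Cmul (RC (/ R)) (Cpow (Cpow (root1 N) (N - 1)) j)))
      with (Cmul (Cmul (RC R) (RC (/ R))) (Cmul (Cpow (root1 N) j) (Cpow (Cpow (root1 N) (N - 1)) j))) by cx.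
    rewrite <- Cpow_Cmul. replace (Cmul (root1 N) (Cpow (root1 N) (N - 1))) with (Cpow (root1 N) (S (N - 1))) by reflexivity.
    replace (S (N - 1)) with N by lia.
    rewrite root1_pow_N by lia. rewrite Cpow_one. unfold RC. apply Ceq; simpl; field; lra. }
  assert (Hsnu : csum nu N = Czero).
  { unfold nu. rewrite csum_scale, sum_root1_pow by lia. cx. }
  assert (Hnum : forall j, Cmod (nu j) = / R).
  { intros j. unfold nu. rewrite Cmod_mul, Cmod_RC, Rabs_right, <- Cpow_mul, Cmod_root1_pow. ring.
    left; apply Rinv_0_lt_compat; auto. }
  assert (E : res_sum R N = cadd (asum (fun j => sc (nu j)) N)
                              (asum (fun j => cmul (sc (nu j)) (cmul x (res_at R N j))) N)).
  { unfold res_sum. rewrite <- asum_add. apply asum_ext. intros j _.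
    destruct (res_spec (circle_pt R N j)) as [[H1 H2] _]. apply circle_pt_in; lra.
    rewrite mul_subl in H1. fold (res_at R N j) in *.
    assert (E1 : cmul (sc (circle_pt R N j)) (res_at R N j) = cadd cone (cmul x (res_at R N j))).
    { rewrite <- H1. unfold csub. rewrite <- cadd_assoc, cadd_opp, addr0. auto. }
    transitivity (cmul (sc (nu j)) (cadd cone (cmul x (res_at R N j)))).
    rewrite <- E1, cmul_assoc, <- sc_mul, Cmul_comm, Hnu, sc_one, cmul_1l. auto.
    rewrite cmul_addr, cmul_1r. auto. }
  rewrite E, asum_sc, Hsnu, sc_zero, cadd_0. apply asum_norm_le. intros j _.
  eapply Rle_trans. apply cnorm_submult. rewrite sc_norm, Hnum.
  apply Rmult_le_compat_l. left; apply Rinv_0_lt_compat; auto.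
  eapply Rle_trans. apply cnorm_submult. apply Rmult_le_compat_l. apply cnorm_ge0.
  apply res_spec, circle_pt_in; lra.
Qed.

(* [res_poly lam k = sum_(i <= k) lam^(k-i) x^i], the polynomial part of [lam^(k+1) R(lam)]. *)
Fixpoint res_poly (lam : Cx) (k : nat) : A :=
  match k with O => cone | S k' => cadd (cmul (sc lam) (res_poly lam k')) (cpow x (S k')) end.

Lemma res_mul_sc lam : rho <= Cmod lam -> cmul (sc lam) (res lam) = cadd cone (cmul x (res lam)).
Proof.
  intros H. destruct (res_spec lam H) as [[H1 H2] _]. rewrite mul_subl in H1.
  rewrite <- H1. unfold csub. rewrite <- cadd_assoc, cadd_opp, addr0. auto.
Qed.

Lemma res_poly_id lam k : rho <= Cmod lam ->
  cmul (sc (Cpow lam (S k))) (res lam) = cadd (res_poly lam k) (cmul (cpow x (S k)) (res lam)).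
Proof.
  intros H. induction k.
  - simpl. rewrite Cmul_1r, cmul_1r. apply res_mul_sc; auto.
  - change (Cpow lam (S (S k))) with (Cmul lam (Cpow lam (S k))).
    rewrite sc_mul, <- cmul_assoc, IHk, cmul_addr. simpl res_poly. rewrite <- cadd_assoc. f_equal.
    rewrite cmul_assoc, sc_comm, <- cmul_assoc, res_mul_sc by auto.
    rewrite cmul_addr, cmul_1r. f_equal. rewrite cmul_assoc, <- cpow_succ_r. auto.
Qed.

Lemma csum_circle_pt_pow r N m : csum (fun j => Cpow (circle_pt r N j) m) N =
   Cmul (Cpow (RC r) m) (csum (fun j => Cpow (Cpow (root1 N) m) j) N).
Proof.
  rewrite <- csum_scale. apply csum_ext. intros j. unfold circle_pt. rewrite Cpow_Cmul, Cpow_comm. auto.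
Qed.

Lemma sum_circle_pt_pow r N m : (0 < m < N)%nat -> csum (fun j => Cpow (circle_pt r N j) m) N = Czero.
Proof. intros H. rewrite csum_circle_pt_pow, sum_root1_pow by auto. cx. Qed.

Lemma sum_circle_pow_res_poly r N k : forall m, (1 <= m)%nat -> (m + k < N)%nat -> rho <= r ->
  asum (fun j => cmul (sc (Cpow (circle_pt r N j) m)) (res_poly (circle_pt r N j) k)) N = czero.
Proof.
  induction k; intros m Hm HmN Hr.
  - simpl res_poly. rewrite (asum_ext _ (fun j => sc (Cpow (circle_pt r N j) m))).
    rewrite asum_sc, sum_circle_pt_pow, sc_zero by lia. auto. intros; apply cmul_1r.
  - simpl res_poly. rewrite (asum_ext _ (fun j => cadd (cmul (sc (Cpow (circle_pt r N j) (S m))) (res_poly (circle_pt r N j) k))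
                                            (cmul (sc (Cpow (circle_pt r N j) m)) (cpow x (S k))))).
    rewrite asum_add, IHk, asum_mulr, asum_sc, sum_circle_pt_pow, sc_zero, mul0r, cadd_0 by (first [lia | lra | auto]). auto.
    intros j _. rewrite cmul_addr. f_equal. simpl Cpow. rewrite cmul_assoc, <- sc_mul, Cmul_comm. auto.
Qed.

Lemma sum_res_poly r N k : (k < N)%nat -> rho <= r ->
  asum (fun j => res_poly (circle_pt r N j) k) N = cmul (sc (RC (INR N))) (cpow x k).
Proof.
  intros Hk Hr. destruct k.
  - simpl. rewrite cmul_1r, <- csum_const1, <- asum_sc, sc_one. auto.
  - simpl res_poly. rewrite asum_add.
    rewrite (asum_ext _ (fun j => cmul (sc (Cpow (circle_pt r N j) 1)) (res_poly (circle_pt r N j) k))).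
    rewrite sum_circle_pow_res_poly by (first [lia | lra | auto]). rewrite cadd_0.
    rewrite (asum_ext _ (fun j => cmul (sc Cone) (cpow x (S k)))), asum_mulr, asum_sc, csum_const1. auto.
    intros; rewrite sc_one, cmul_1l; auto.
    intros; simpl Cpow; rewrite Cmul_1r; auto.
Qed.

Lemma cnorm_cpow_scaled_le N k : (k < N)%nat ->
  INR N * cnorm (cpow x k) <= INR N * (rho ^ (k + 1) * M) + cnorm x ^ (k + 1) * cnorm (res_sum rho N).
Proof.
  intros HNk.
  set (moment := asum (fun j => cmul (sc (Cpow (circle_pt rho N j) (S k))) (res_at rho N j)) N).
  assert (Hid : moment = cadd (cmul (sc (RC (INR N))) (cpow x k)) (cmul (cpow x (S k)) (res_sum rho N))).
  { unfold moment, res_at.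
    rewrite (asum_ext _ (fun j => cadd (res_poly (circle_pt rho N j) k) (cmul (cpow x (S k)) (res (circle_pt rho N j))))).
    - rewrite asum_add, sum_res_poly, asum_mull by (auto; lra). auto.
    - intros j _. apply res_poly_id, circle_pt_in; lra. }
  assert (Hmoment : cnorm moment <= INR N * (rho ^ (k + 1) * M)).
  { apply asum_norm_le. intros j _. eapply Rle_trans. apply cnorm_submult.
    rewrite sc_norm, Cmod_Cpow, Cmod_circle_pt, Nat.add_1_r by lra.
    apply Rmult_le_compat_l. apply pow_le; lra. apply res_spec, circle_pt_in; lra. }
  assert (Hxk : cnorm (cmul (cpow x (S k)) (res_sum rho N)) <= cnorm x ^ (k + 1) * cnorm (res_sum rho N)).
  { eapply Rle_trans. apply cnorm_submult. apply Rmult_le_compat_r. apply cnorm_ge0.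
    rewrite Nat.add_1_r. apply cnorm_cpow_le. }
  pose proof (cnorm_sub_le (cadd (cmul (sc (RC (INR N))) (cpow x k)) (cmul (cpow x (S k)) (res_sum rho N)))
                          (cmul (cpow x (S k)) (res_sum rho N))) as H.
  rewrite addrK, <- Hid, sc_mull, cnorm_scal, Cmod_RC, Rabs_right in H by (apply Rle_ge, pos_INR).
  lra.
Qed.

Lemma res_sum_norm_le Rb N : rho <= Rb -> (N >= 4)%nat ->
  cnorm (res_sum rho N) <=
  INR N * (/ Rb * (cnorm x * M)) + (Rb - rho) * (Rb * (2 * PI) + (Rb - rho)) * (M * M * M).
Proof.
  intros HRb HN. assert (HNp : 0 < INR N) by (apply lt_0_INR; lia).
  pose proof (res_sum_far_le Rb N HRb ltac:(lia)) as Hfar.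
  pose proof (res_sum_radial_le Rb N N HRb ltac:(lia) ltac:(lia)) as Hradial.
  pose proof (cnorm_sub_ge (res_sum rho N) (res_sum Rb N)) as H. rewrite cnorm_subC in H.
  assert (HM3 : 0 <= M * M * M) by (apply Rmult_le_pos; [apply Rmult_le_pos|]; auto).
  assert (INR N * (Rb - rho) * (Rb * Cmod (Csub Cone (root1 N)) + (Rb - rho) / INR N) * (M * M * M) <=
          (Rb - rho) * (Rb * (2 * PI) + (Rb - rho)) * (M * M * M)).
  { replace ((Rb - rho) * (Rb * (2 * PI) + (Rb - rho)))
      with (INR N * (Rb - rho) * (Rb * (2 * PI / INR N) + (Rb - rho) / INR N)) by (field; lra).
    pose proof (Cmod_one_sub_root1_le N HN).
    apply Rmult_le_compat_r; auto. apply Rmult_le_compat_l. apply Rmult_le_pos; lra.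
    apply Rplus_le_compat_r. apply Rmult_le_compat_l; lra. }
  lra.
Qed.

(* Take the outer radius [Rb] so large that the [/ Rb] term is below [eps / 2], and only then
   [N] so large that the remaining, [N]-independent term divided by [N] is below [eps / 2]. *)
Lemma cnorm_cpow_le_resolvent k : cnorm (cpow x k) <= rho ^ (k + 1) * M.
Proof.
  apply Rle_of_le_eps. intros eps He.
  set (B := cnorm x ^ (k + 1)).
  assert (HB : 0 <= B) by (apply pow_le, cnorm_ge0).
  assert (HBXM : 0 <= B * cnorm x * M) by (pose proof (cnorm_ge0 x); apply Rmult_le_pos; [apply Rmult_le_pos|]; auto).
  set (Rb := rho + 1 + 2 * B * cnorm x * M / eps).
  assert (HRb : rho + 1 <= Rb).
  { unfold Rb. assert (0 <= 2 * B * cnorm x * M / eps) by (apply Rmult_le_pos; [lra | left; apply Rinv_0_lt_compat; auto]).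
    lra. }
  assert (HRb2 : B * (/ Rb * (cnorm x * M)) <= eps / 2).
  { replace (B * (/ Rb * (cnorm x * M))) with (B * cnorm x * M / Rb) by (field; lra).
    apply (Rmult_le_reg_r Rb); [lra |]. unfold Rdiv. rewrite Rmult_assoc, Rinv_l, Rmult_1_r by lra.
    assert (2 * B * cnorm x * M / eps <= Rb) by (unfold Rb; lra).
    apply (Rmult_le_compat_r eps) in H; [|lra]. unfold Rdiv in H.
    rewrite Rmult_assoc, Rinv_l, Rmult_1_r in H by lra. nra. }
  set (C := B * ((Rb - rho) * (Rb * (2 * PI) + (Rb - rho)) * (M * M * M))).
  destruct (INR_unbounded (2 * C / eps)) as [N0 HN0].
  set (N := (N0 + k + 4)%nat).
  assert (HNp : 0 < INR N) by (apply lt_0_INR; unfold N; lia).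
  assert (HCN : C <= INR N * (eps / 2)).
  { assert (INR N0 <= INR N) by (apply le_INR; unfold N; lia).
    assert (2 * C / eps < INR N) by lra. apply (Rmult_lt_compat_r eps) in H0; [|lra].
    unfold Rdiv in H0. rewrite Rmult_assoc, Rinv_l, Rmult_1_r in H0 by lra. lra. }
  pose proof (cnorm_cpow_scaled_le N k ltac:(unfold N; lia)) as Hscaled. fold B in Hscaled.
  pose proof (res_sum_norm_le Rb N ltac:(lra) ltac:(unfold N; lia)) as Hsum.
  apply Rmult_le_compat_l with (r := B) in Hsum; [|auto].
  rewrite Rmult_plus_distr_l in Hsum. fold C in Hsum.
  replace (B * (INR N * (/ Rb * (cnorm x * M)))) with (INR N * (B * (/ Rb * (cnorm x * M)))) in Hsum by ring.
  assert (INR N * (B * (/ Rb * (cnorm x * M))) <= INR N * (eps / 2)) by (apply Rmult_le_compat_l; lra).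
  apply (Rmult_le_reg_l (INR N)); [auto | lra].
Qed.
End DiscreteCauchyEstimate.

(** * Self-adjoint elements *)

Lemma bernoulli_ineq q n : 1 <= q -> 1 + INR n * (q - 1) <= q ^ n.
Proof.
  intros H. induction n. simpl; lra. rewrite S_INR. simpl.
  pose proof (pos_INR n).
  assert (0 <= (q - 1) * (q ^ n - (1 + INR n * (q - 1)))) by (apply Rmult_le_pos; lra).
  assert (0 <= INR n * (q - 1) * (q - 1)) by (apply Rmult_le_pos; [apply Rmult_le_pos|]; lra).
  nra.
Qed.
Lemma le_pow2S j : (S j <= 2 ^ j)%nat.
Proof. induction j; simpl; lia. Qed.
Lemma le_pow2 j : (j <= 2 ^ j)%nat.
Proof. pose proof (le_pow2S j). lia. Qed.

Section SelfAdjoint.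
Context {A : CstarAlgebra}.
Implicit Types a b c h : A.

Lemma selfadjoint_cpow h n : cstar h = h -> cstar (cpow h n) = cpow h n.
Proof.
  intros H. induction n; simpl. apply star_one. rewrite cstar_mul, IHn, H, <- cpow_succ_r. auto.
Qed.
Lemma cnorm_cpow_pow2 h j : cstar h = h -> cnorm (cpow h (2 ^ j)) = cnorm h ^ (2 ^ j).
Proof.
  intros H. induction j. simpl. rewrite cmul_1r. ring.
  replace (2 ^ S j)%nat with (2 ^ j + 2 ^ j)%nat by (simpl; lia).
  rewrite cpow_add, <- (selfadjoint_cpow h (2 ^ j)) at 1 by auto. rewrite cnorm_cstar, IHj, <- pow_add. auto.
Qed.

Lemma sc_RC_star r : cstar (@sc A (RC r)) = sc (RC r).
Proof. rewrite star_sc. f_equal. unfold RC; cx. Qed.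

Lemma Cmod_sub_RC_le (lam : Cx) (t e : R) : 0 <= Re lam ->
  t - e / 2 <= Cmod lam <= t + e / 2 -> Rabs (Im lam) <= e / 4 -> Cmod (Csub lam (RC t)) <= e.
Proof.
  intros Ha Hlam Hb. set (a := Re lam) in *. set (b := Im lam) in *.
  pose proof (Cmod_sq lam) as HL. pose proof (Cmod_Re lam) as HLa. pose proof (Cmod_ge0 lam).
  fold a b in HL, HLa. rewrite Rabs_right in HLa by lra.
  pose proof (Rabs_pos b). pose proof (Rsqr_abs b) as Hb2. unfold Rsqr in Hb2.
  assert (HLb : Cmod lam <= a + Rabs b) by nra.
  apply Cmod_le_of_sq; [lra |]. simpl. fold a b. nra.
Qed.

Lemma Cmod_sub_pm_RC_le (lam : Cx) (t e : R) :
  t - e / 2 <= Cmod lam <= t + e / 2 -> Rabs (Im lam) <= e / 4 ->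
  Cmod (Csub lam (RC t)) <= e \/ Cmod (Csub lam (RC (- t))) <= e.
Proof.
  intros Hlam Hb. destruct (Rle_dec 0 (Re lam)) as [Hre|Hre].
  - left. apply Cmod_sub_RC_le; auto.
  - right. replace (Csub lam (RC (- t))) with (Copp (Csub (Copp lam) (RC t))) by (unfold RC; cx).
    rewrite Cmod_opp. apply Cmod_sub_RC_le.
    + simpl. lra.
    + rewrite Cmod_opp. lra.
    + simpl. rewrite Rabs_Ropp. lra.
Qed.

Lemma isinv_near a (s lam : Cx) b m : isinv (csub (sc s) a) b -> cnorm b <= m -> 0 < m ->
  Cmod (Csub lam s) <= 1 / (2 * m) -> exists c, isinv (csub (sc lam) a) c /\ cnorm c <= 2 * m.
Proof.
  intros Hb Hbm Hm Hlam.
  destruct (isinv_add_small _ b (sc (Csub lam s)) m Hb Hbm Hm) as [c [Hc Hcn]].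
  { rewrite sc_norm. exact Hlam. }
  exists c. split; auto. rewrite sc_sub, sub_add_sub in Hc. exact Hc.
Qed.

(* Outside the disc of radius [t + eta / 2] use the Neumann series, off the real axis the
   self-adjoint resolvent bound, and near [t] or [-t] perturb the inverses there. *)
Lemma selfadjoint_resolvent_bounded_near_norm h :
  cstar h = h -> 0 < cnorm h ->
  invertible A (csub h (sc (RC (cnorm h)))) -> invertible A (csub h (sc (RC (- cnorm h)))) ->
  exists rho Mb, 0 < rho < cnorm h /\ 0 <= Mb /\
    forall lam, rho <= Cmod lam -> exists c, isinv (csub (sc lam) h) c /\ cnorm c <= Mb.
Proof.
  intros Hh Ht [b1 Hb1] [b2 Hb2]. set (t := cnorm h) in *.
  set (m0 := cnorm b1 + cnorm b2 + 1).
  assert (Hm0 : 0 < m0) by (unfold m0; pose proof (cnorm_ge0 b1); pose proof (cnorm_ge0 b2); lra).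
  set (eta := Rmin (1 / (2 * m0)) t).
  assert (Heta : 0 < eta).
  { apply Rmin_glb_lt; auto. unfold Rdiv. apply Rmult_lt_0_compat; [lra | apply Rinv_0_lt_compat; lra]. }
  assert (Heta1 : eta <= 1 / (2 * m0)) by apply Rmin_l.
  assert (Heta2 : eta <= t) by apply Rmin_r.
  assert (Hinv4 : / (eta / 4) = 4 / eta) by (field; lra).
  assert (Hpos4 : 0 < 4 / eta) by (rewrite <- Hinv4; apply Rinv_0_lt_compat; lra).
  assert (Ht2 : 0 <= t * t + 1) by nra.
  assert (H2 : 0 < 2 / eta) by (unfold Rdiv; apply Rmult_lt_0_compat; [lra | apply Rinv_0_lt_compat; lra]).
  set (Mb := 2 / eta + 2 * m0 + (t + eta / 2 + (t * t + 1) * (4 / eta))).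
  exists (t - eta / 2), Mb. split; [lra | split; [unfold Mb; nra |]].
  intros lam Hlam.
  destruct (Rle_dec (t + eta / 2) (Cmod lam)) as [Hfar|Hfar].
  { destruct (isinv_sc_sub lam h) as [c [Hc Hcn]]; [fold t; lra |]. exists c. split; auto.
    eapply Rle_trans; [apply Hcn |]. apply Rle_trans with (2 / eta); [| unfold Mb; nra].
    unfold Rdiv. rewrite Rmult_1_l. apply Rle_trans with (/ (eta / 2)).
    - apply Rinv_le_contravar; fold t; lra.
    - right. field. lra. }
  destruct (Rle_dec (eta / 4) (Rabs (Im lam))) as [Hoff|Hoff].
  { assert (Hb : Im lam <> 0) by (intro E; rewrite E, Rabs_R0 in Hoff; lra).
    destruct (selfadjoint_nonreal_resolvent h lam Hh Hb) as [c [Hc Hcn]]. exists c. split; auto.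
    eapply Rle_trans; [apply Hcn |]. fold t.
    assert ((t * t + 1) / Rabs (Im lam) <= (t * t + 1) * (4 / eta)).
    { unfold Rdiv at 1. apply Rmult_le_compat_l; [lra |]. rewrite <- Hinv4. apply Rinv_le_contravar; lra. }
    unfold Mb. lra. }
  assert (Hnear : forall s b, isinv (csub h (sc s)) b -> cnorm b <= m0 -> Cmod (Csub lam s) <= eta ->
            exists c, isinv (csub (sc lam) h) c /\ cnorm c <= Mb).
  { intros s b Hb Hbn Hs.
    destruct (isinv_near h s lam (copp b) m0) as [c [Hc Hcn]]; [| rewrite cnormN; auto | auto | lra |].
    - rewrite <- oppB. apply isinv_opp, Hb.
    - exists c. split; auto. unfold Mb. nra. }
  pose proof (cnorm_ge0 b1). pose proof (cnorm_ge0 b2).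
  destruct (Cmod_sub_pm_RC_le lam t eta) as [Hs|Hs]; [fold t; lra | lra | |].
  - apply (Hnear (RC t) b1); auto. unfold m0. lra.
  - apply (Hnear (RC (- t)) b2); auto. unfold m0. lra.
Qed.

(* Gelfand's spectral radius bound: [cnorm_cpow_le_resolvent] gives [|h|^(2^j) <= rho^(2^j+1) Mb],
   which for [|h| > rho] contradicts the Bernoulli growth of [(|h| / rho)^(2^j)]. *)
Lemma selfadjoint_cnorm_le_resolvent_bound h (rho Mb : R) : cstar h = h -> 0 < rho -> 0 <= Mb ->
  (forall lam, rho <= Cmod lam -> exists c, isinv (csub (sc lam) h) c /\ cnorm c <= Mb) ->
  cnorm h <= rho.
Proof.
  intros Hh Hrho HMb Hres. set (t := cnorm h).
  destruct (Rle_dec t rho) as [Hle|Hgt]; auto. exfalso.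
  assert (Hspec : forall lam, rho <= Cmod lam ->
    isinv (csub (sc lam) h) (inv (csub (sc lam) h)) /\ cnorm (inv (csub (sc lam) h)) <= Mb).
  { intros lam Hl. destruct (Hres lam Hl) as [c [Hc Hcn]]. rewrite (inv_eq _ c Hc). auto. }
  pose proof (cnorm_cpow_le_resolvent h rho Mb _ Hrho HMb Hspec) as Hpow.
  set (q := t / rho).
  assert (Hq : 1 < q).
  { unfold q. apply (Rmult_lt_reg_r rho); auto. unfold Rdiv.
    rewrite Rmult_assoc, Rinv_l, Rmult_1_r, Rmult_1_l by lra. lra. }
  destruct (INR_unbounded (rho * Mb / (q - 1))) as [j Hj].
  specialize (Hpow (2 ^ j)%nat). rewrite cnorm_cpow_pow2 in Hpow by auto. fold t in Hpow.
  replace t with (q * rho) in Hpow by (unfold q; field; lra).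
  rewrite Rpow_mult_distr, pow_add in Hpow. simpl pow in Hpow.
  assert (Hrn : 0 < rho ^ (2 ^ j)) by (apply pow_lt; auto).
  assert (q ^ (2 ^ j) <= rho * Mb).
  { apply (Rmult_le_reg_r (rho ^ (2 ^ j))); auto. nra. }
  pose proof (bernoulli_ineq q (2 ^ j) ltac:(lra)).
  assert (INR j <= INR (2 ^ j)) by (apply le_INR, le_pow2).
  assert (rho * Mb < INR j * (q - 1)).
  { apply (Rmult_lt_reg_r (/ (q - 1))). apply Rinv_0_lt_compat; lra.
    replace (INR j * (q - 1) * / (q - 1)) with (INR j) by (field; lra). auto. }
  nra.
Qed.

Lemma selfadjoint_norm_in_spectrum h : cstar h = h ->
  spectrum A h (RC (cnorm h)) \/ spectrum A h (RC (- cnorm h)).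
Proof.
  intros Hh. unfold spectrum.
  destruct (classic (invertible A (csub h (cscal (RC (cnorm h)) cone)))) as [I1|]; [| auto].
  destruct (classic (invertible A (csub h (cscal (RC (- cnorm h)) cone)))) as [I2|]; [| auto].
  exfalso. destruct (Req_dec (cnorm h) 0) as [Ht0|Ht0].
  - assert (h = czero) by (apply cnorm_eq0; auto). subst h.
    rewrite Ht0 in I1. destruct I1 as [b [Hb _]].
    replace (RC 0) with Czero in Hb by (unfold RC; cx).
    change (cscal Czero cone) with (@sc A Czero) in Hb.
    rewrite sc_zero in Hb. unfold csub in Hb. rewrite addrN, mul0r in Hb.
    apply (@cone_neq0 A). auto.
  - pose proof (cnorm_ge0 h).
    destruct (selfadjoint_resolvent_bounded_near_norm h Hh ltac:(lra) I1 I2) as [rho [Mb [Hrho [HMb Hres]]]].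
    pose proof (selfadjoint_cnorm_le_resolvent_bound h rho Mb Hh ltac:(lra) HMb Hres). lra.
Qed.
End SelfAdjoint.

(** * Positive elements *)

Lemma Rabs_le_between x a : Rabs x <= a -> - a <= x <= a.
Proof. intros H. unfold Rabs in H. destruct (Rcase_abs x); lra. Qed.

Section Positive.
Context {A : CstarAlgebra}.
Implicit Types a b c g : A.

Lemma invertible_opp_iff a : invertible A (copp a) <-> invertible A a.
Proof. split; intros H. rewrite <- (oppK a). apply invertible_opp; auto. apply invertible_opp; auto. Qed.

Lemma spectrum_sc_sub a (s w : Cx) : spectrum A (csub (sc s) a) w <-> spectrum A a (Csub s w).
Proof.
  unfold spectrum. change (cscal w cone) with (@sc A w). change (cscal (Csub s w) cone) with (@sc A (Csub s w)).
  replace (csub (csub (sc s) a) (sc w)) with (copp (csub a (sc (Csub s w)))).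
  rewrite invertible_opp_iff. tauto.
  rewrite sc_sub. unfold csub. rewrite !oppD, !oppK.
  rewrite (cadd_comm (copp a)), <- !cadd_assoc. f_equal. apply cadd_comm.
Qed.

Lemma Csub_RC_Re r z : Re (Csub (RC r) z) = r - Re z.
Proof. simpl. ring. Qed.
Lemma Csub_RC_Im r z : Im (Csub (RC r) z) = - Im z.
Proof. simpl. ring. Qed.

Lemma selfadjoint_sc_sub a (s : R) : cstar a = a -> cstar (csub (sc (RC s)) a) = csub (sc (RC s)) a.
Proof. intros H. rewrite star_sub, sc_RC_star, H. auto. Qed.

Lemma positive_shift_norm_le a s : positive a -> cnorm a <= s -> cnorm (csub (sc (RC s)) a) <= s.
Proof.
  intros [Ha Hp] Hs. set (g := csub (sc (RC s)) a).
  assert (Hg : cstar g = g) by (apply selfadjoint_sc_sub; auto).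
  pose proof (cnorm_ge0 a). pose proof (cnorm_ge0 g).
  destruct (selfadjoint_norm_in_spectrum g Hg) as [H1|H1]; apply spectrum_sc_sub in H1.
  - destruct (Hp _ H1) as [_ H2]. simpl in H2. lra.
  - pose proof (spectrum_norm_le _ _ H1). destruct (Hp _ H1) as [_ H3]. simpl in H3.
    pose proof (Cmod_Re (Csub (RC s) (RC (- cnorm g)))). simpl in H4.
    rewrite Rabs_right in H4 by lra. lra.
Qed.

Lemma positive_add a c : positive a -> positive c -> positive (cadd a c).
Proof.
  intros Pa Pc. pose proof Pa as [Ha _]. pose proof Pc as [Hc _].
  assert (Hs : cstar (cadd a c) = cadd a c) by (rewrite cstar_add, Ha, Hc; auto).
  split; auto. intros z Hz. split. apply (selfadjoint_spectrum_real _ _ Hs Hz).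
  set (s := cnorm a + cnorm c). pose proof (cnorm_ge0 a). pose proof (cnorm_ge0 c).
  set (g := csub (sc (RC (2 * s))) (cadd a c)).
  assert (Eg : g = cadd (csub (sc (RC s)) a) (csub (sc (RC s)) c)).
  { unfold g. replace (RC (2 * s)) with (Cadd (RC s) (RC s)) by (unfold RC; cx).
    rewrite sc_add. unfold csub. rewrite oppD, <- !cadd_assoc. f_equal.
    rewrite cadd_comm, <- !cadd_assoc. f_equal. apply cadd_comm. }
  assert (Hgn : cnorm g <= 2 * s).
  { rewrite Eg. eapply Rle_trans. apply cnorm_triangle.
    pose proof (positive_shift_norm_le a s Pa ltac:(unfold s; lra)). pose proof (positive_shift_norm_le c s Pc ltac:(unfold s; lra)). lra. }
  assert (Hsp : spectrum A g (Csub (RC (2 * s)) z)).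
  { unfold g. apply spectrum_sc_sub. replace (Csub (RC (2 * s)) (Csub (RC (2 * s)) z)) with z by (unfold RC; cx). auto. }
  pose proof (spectrum_norm_le _ _ Hsp). pose proof (Cmod_Re (Csub (RC (2 * s)) z)).
  rewrite Csub_RC_Re in H2. apply Rabs_le_between in H2 as [_ H2]. lra.
Qed.

(* For [beta = |a + c|] both [beta - (a + c)] and [beta - a = (beta - (a + c)) + c] are positive,
   while [|a|] lies in the spectrum of [a]. *)
Lemma positive_norm_le_add a c : positive a -> positive c -> cnorm a <= cnorm (cadd a c).
Proof.
  intros Pa Pc. set (b := cadd a c). set (beta := cnorm b).
  assert (Pb : positive b) by (apply positive_add; auto). pose proof Pb as [Hb _].
  pose proof (cnorm_ge0 b). pose proof (cnorm_ge0 a).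
  assert (P1 : positive (csub (sc (RC beta)) b)).
  { split. apply selfadjoint_sc_sub; auto. intros z Hz. apply spectrum_sc_sub in Hz.
    pose proof (selfadjoint_spectrum_real _ _ Hb Hz). pose proof (spectrum_norm_le _ _ Hz).
    pose proof (Cmod_Re (Csub (RC beta) z)). rewrite Csub_RC_Re in H3. rewrite Csub_RC_Im in H1.
    apply Rabs_le_between in H3. fold beta in H2. split; lra. }
  assert (P2 : positive (csub (sc (RC beta)) a)).
  { replace (csub (sc (RC beta)) a) with (cadd (csub (sc (RC beta)) b) c). apply positive_add; auto.
    unfold b, csub. rewrite oppD, <- !cadd_assoc. f_equal. f_equal. rewrite cadd_opp. apply addr0. }
  destruct (selfadjoint_norm_in_spectrum a (proj1 Pa)) as [H1|H1].
  - assert (spectrum A (csub (sc (RC beta)) a) (Csub (RC beta) (RC (cnorm a)))).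
    { apply spectrum_sc_sub. replace (Csub (RC beta) (Csub (RC beta) (RC (cnorm a)))) with (RC (cnorm a)) by (unfold RC; cx). auto. }
    destruct (proj2 P2 _ H2) as [_ H3]. simpl in H3. fold beta. lra.
  - destruct (proj2 Pa _ H1) as [_ H3]. simpl in H3. unfold beta. lra.
Qed.

Lemma cle_norm (d e : A) : positive d -> cle d e -> cnorm d <= cnorm e.
Proof.
  intros Pd He. unfold cle in He. pose proof (positive_norm_le_add d (csub e d) Pd He).
  unfold csub in H. rewrite cadd_comm, <- cadd_assoc, cadd_opp, addr0 in H. auto.
Qed.
End Positive.

(** * Ciric contractions *)

Lemma iter_S {X : Type} (T : X -> X) n x : iter (S n) T x = iter n T (T x).
Proof. induction n; simpl; auto. simpl in IHn. rewrite IHn. auto. Qed.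
Lemma iter_fix {X : Type} (T : X -> X) n u : T u = u -> iter n T u = u.
Proof. intros H. induction n; simpl; auto. rewrite IHn; auto. Qed.

Definition dnorm {A : CstarAlgebra} {X : Type} (d : X -> X -> A) (x y : X) : R := cnorm (d x y).

Section CstarMetric.
Variables (A : CstarAlgebra) (X : Type) (d : X -> X -> A).
Hypothesis Hd : cstar_metric A X d.

Lemma dnorm_ge0 x y : 0 <= dnorm d x y.
Proof. apply cnorm_ge0. Qed.
Lemma dnorm_refl x : dnorm d x x = 0.
Proof. destruct Hd as [_ [_ [Hz _]]]. unfold dnorm. rewrite (proj2 (Hz x x) eq_refl). apply cnorm0. Qed.
Lemma dnorm_eq0 x y : dnorm d x y = 0 -> x = y.
Proof. destruct Hd as [_ [_ [Hz _]]]. intros H. apply Hz, cnorm_eq0, H. Qed.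
Lemma dnorm_sym x y : dnorm d x y = dnorm d y x.
Proof. destruct Hd as [_ [_ [_ [Hs _]]]]. unfold dnorm. rewrite Hs. auto. Qed.
Lemma dnorm_triangle x y z : dnorm d x z <= dnorm d x y + dnorm d y z.
Proof.
  destruct Hd as [_ [Hp [_ [_ Ht]]]]. unfold dnorm. eapply Rle_trans.
  - apply cle_norm; [apply Hp | apply Ht].
  - apply cnorm_triangle.
Qed.

Lemma cconverges_unique (u : nat -> X) z w : cconverges d u z -> cconverges d u w -> z = w.
Proof.
  intros H1 H2. apply dnorm_eq0, Rle_eps_eq0; [apply dnorm_ge0 |]. intros eps He.
  destruct (H1 (eps / 2)) as [N1 HN1]; [lra |]. destruct (H2 (eps / 2)) as [N2 HN2]; [lra |].
  specialize (HN1 (N1 + N2)%nat ltac:(lia)). specialize (HN2 (N1 + N2)%nat ltac:(lia)).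
  unfold R_dist in *. rewrite Rminus_0_r, Rabs_right in HN1, HN2 by apply Rle_ge, cnorm_ge0.
  pose proof (dnorm_triangle z (u (N1 + N2)%nat) w). rewrite (dnorm_sym z (u _)) in H. unfold dnorm in *. lra.
Qed.

Section Ciric.
Variables (T : X -> X) (q delta : X -> X -> A).
Hypothesis q_lt1 : forall x y, 0 <= cnorm (q x y) < 1.
Hypothesis ciric_le : forall x y n, (1 <= n)%nat ->
  cle (d (iter n T x) (iter n T y)) (cmul (cmul (cpow (cstar (q x y)) n) (delta x y)) (cpow (q x y) n)).

Lemma dnorm_iter_le x y n :
  dnorm d (iter n T x) (iter n T y) <= (cnorm (delta x y) + dnorm d x y) * cnorm (q x y) ^ n.
Proof.
  destruct Hd as [_ [Hp _]]. pose proof (cnorm_ge0 (delta x y)). pose proof (dnorm_ge0 x y).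
  destruct (q_lt1 x y). assert (0 <= cnorm (q x y) ^ n) by (apply pow_le; lra).
  destruct n as [|n].
  - simpl. lra.
  - eapply Rle_trans; [apply cle_norm; [apply Hp | apply ciric_le; lia] |].
    eapply Rle_trans; [apply cnorm_conj_cpow_le; lra |]. nra.
Qed.

Lemma iter_subseq_converges_fixed u x (g : nat -> nat) : T u = u -> (forall n, (n <= g n)%nat) ->
  cconverges d (fun n => iter (g n) T x) u.
Proof.
  intros Hu Hg. apply (Un_cv_pow_subseq _ (cnorm (delta x u) + dnorm d x u) (cnorm (q x u)) g); auto.
  - pose proof (cnorm_ge0 (delta x u)). pose proof (dnorm_ge0 x u). lra.
  - intros n. split; [apply cnorm_ge0 |].
    pose proof (dnorm_iter_le x u (g n)) as H. rewrite (iter_fix T (g n) u Hu) in H. exact H.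
Qed.

Lemma fixed_point_unique u v : T u = u -> T v = v -> u = v.
Proof.
  intros Hu Hv. apply (cconverges_unique (fun n => iter n T u));
    apply iter_subseq_converges_fixed; auto.
Qed.

Lemma orbit_cauchy x : ccauchy d (fun n => iter n T x).
Proof.
  intros eps He. destruct (q_lt1 x (T x)).
  apply (geometric_cauchy X (dnorm d) dnorm_refl dnorm_sym dnorm_triangle _
           (cnorm (delta x (T x)) + dnorm d x (T x)) (cnorm (q x (T x)))); auto.
  intros n. rewrite iter_S. apply dnorm_iter_le.
Qed.

Lemma fixed_point_of_orbitally_continuous :
  ccomplete_metric d -> orbitally_continuous d T -> exists u, T u = u.
Proof.
  intros Hcomp Hoc. destruct Hd as [[x0] _].
  destruct (Hcomp _ (orbit_cauchy x0)) as [z Hz].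
  pose proof (Hoc z x0 (fun i => i) (fun i => Nat.lt_succ_diag_r i) Hz) as HTz.
  assert (Hz' : cconverges d (fun i => iter (S i) T x0) z).
  { intros eps He. destruct (Hz eps He) as [N HN]. exists N. intros n Hn. apply HN. lia. }
  exists z. exact (cconverges_unique _ _ _ HTz Hz').
Qed.

Lemma orbitally_continuous_of_fixed_point u : T u = u -> orbitally_continuous d T.
Proof.
  intros Hu w x ni Hni Hconv.
  assert (Hge : forall i, (i <= ni i)%nat) by (induction i; [lia | specialize (Hni i); lia]).
  assert (w = u) by exact (cconverges_unique _ _ _ Hconv (iter_subseq_converges_fixed u x ni Hu Hge)).
  subst w. rewrite Hu. apply (iter_subseq_converges_fixed u x (fun i => S (ni i)) Hu).
  intros i. specialize (Hge i). lia.
Qed.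
End Ciric.
End CstarMetric.

Theorem theorem3p6 (A : CstarAlgebra) (X : Type) (d : X -> X -> A) (T : X -> X) :
  cstar_metric A X d ->
  ccomplete_metric d ->
  ciric_type1 d T ->
  (orbitally_continuous d T <-> exists! u : X, T u = u).
Proof.
  intros Hd Hcomp [q [delta [Hq [_ Hc]]]]. split.
  - intros Hoc. destruct (fixed_point_of_orbitally_continuous A X d Hd T q delta Hq Hc Hcomp Hoc) as [u Hu].
    exists u. split; auto. intros v Hv. exact (fixed_point_unique A X d Hd T q delta Hq Hc u v Hu Hv).
  - intros [u [Hu _]]. exact (orbitally_continuous_of_fixed_point A X d Hd T q delta Hq Hc u Hu).
Qed.
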